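(* Under the event-triggered closed loop described in the context, for all $j$ and all $t\in(t_j,t_{j+1})$, $$\dot d(t)^2\le\rho_1d^2(t)+\alpha_1\|\hat w[t]\|^2+\alpha_2|\hat w(1,t)|^2+\alpha_3|\tilde w(0,t)|^2,$$ where $\rho_1=6\varepsilon^2k(1)^2$, $\alpha_1=3\Big(1+\big(\int_0^1\int_0^xL^2(x,y)dydx\big)^{1/2}\Big)^2\int_0^1\big(\varepsilon k''(y)+\varepsilon k(1)k(y)+\lambda k(y)\big)^2dy+6\big(\varepsilon qk(1)+\varepsilon k'(1)\big)^2\int_0^1L^2(1,y)dy$, $\alpha_2=6\big(\varepsilon qk(1)+\varepsilon k'(1)\big)^2$, and $\alpha_3=6\Big(\frac{\lambda k(0)}{2}+\int_0^1k(y)p_1(y)dy\Big)^2$.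
   Context: Setup. $\varepsilon,\lambda>0$, $q>(\lambda+\varepsilon)/(2\varepsilon)$, $r=q-\lambda/(2\varepsilon)$. $I_m,J_m$ are the modified and ordinary Bessel functions of the first kind (with $I_1(z)/z,J_1(z)/z\to1/2$ at $z=0$). Kernels on $0\le y\le x\le1$: $P(x,y)=\frac{q\lambda/\varepsilon}{\sqrt{\lambda/\varepsilon+q^2}}\int_0^{x-y}e^{-q\tau/2}I_0\big(\sqrt{\lambda(2-x-y)(x-y-\tau)/\varepsilon}\big)\sinh\big(\tfrac{\sqrt{\lambda/\varepsilon+q^2}}{2}\tau\big)d\tau-\frac{\lambda}{\varepsilon}(1-y)\frac{I_1(\sqrt{\lambda((1-y)^2-(1-x)^2)/\varepsilon})}{\sqrt{\lambda((1-y)^2-(1-x)^2)/\varepsilon}}$; $Q(x,y)=\frac{q\lambda/\varepsilon}{\sqrt{q^2-\lambda/\varepsilon}}\int_0^{x-y}e^{-q\tau/2}J_0\big(\sqrt{\lambda(2-x-y)(x-y-\tau)/\varepsilon}\big)\sinh\big(\tfrac{\sqrt{q^2-\lambda/\varepsilon}}{2}\tau\big)d\tau-\frac{\lambda}{\varepsilon}(1-y)\frac{J_1(\sqrt{\lambda((1-y)^2-(1-x)^2)/\varepsilon})}{\sqrt{\lambda((1-y)^2-(1-x)^2)/\varepsilon}}$; $K(x,y)=-\frac{\lambda}{\varepsilon}x\frac{I_1(\sqrt{\lambda(x^2-y^2)/\varepsilon})}{\sqrt{\lambda(x^2-y^2)/\varepsilon}}$, $L(x,y)=-\frac{\lambda}{\varepsilon}x\frac{J_1(\sqrt{\lambda(x^2-y^2)/\varepsilon})}{\sqrt{\lambda(x^2-y^2)/\varepsilon}}$.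 Gains $p_1(x)=\varepsilon P_y(x,0)$, $p_{10}=-\lambda/(2\varepsilon)$. Let $k(y)=rK(1,y)+K_x(1,y)$. Closed loop: plant $u_t=\varepsilon u_{xx}+\lambda u$, $u_x(0,t)=0$, $u_x(1,t)+qu(1,t)=U_j$; observer $\hat u_t=\varepsilon\hat u_{xx}+\lambda\hat u+p_1(x)(u(0,t)-\hat u(0,t))$, $\hat u_x(0,t)=p_{10}(u(0,t)-\hat u(0,t))$, $\hat u_x(1,t)+q\hat u(1,t)=U_j$, for $t\in[t_j,t_{j+1})$, with $U_j=\int_0^1k(y)\hat u(y,t_j)dy$. Set $\tilde u=u-\hat u$, $\tilde w(x,t)=\tilde u(x,t)+\int_0^xQ(x,y)\tilde u(y,t)dy$, $\hat w(x,t)=\hat u(x,t)-\int_0^xK(x,y)\hat u(y,t)dy$. The input holding error is $d(t)=\int_0^1k(y)(\hat u(y,t_j)-\hat u(y,t))dy$ for $t\in[t_j,t_{j+1})$, where $0=t_0<t_1<\dots$ is any increasing sequence of update times (e.g. the one generated by the event trigger). *)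

From Stdlib Require Import Reals Lra Factorial.
From Coquelicot Require Import Coquelicot.
Open Scope R_scope.

Definition BesselI0 (z : R) : R :=
  Series (fun m => (z / 2) ^ (2 * m) / (INR (fact m)) ^ 2).
Definition BesselI1 (z : R) : R :=
  Series (fun m => (z / 2) ^ (2 * m + 1) / (INR (fact m) * INR (fact (m + 1)))).
Definition BesselJ0 (z : R) : R :=
  Series (fun m => (-1) ^ m * (z / 2) ^ (2 * m) / (INR (fact m)) ^ 2).
Definition BesselJ1 (z : R) : R :=
  Series (fun m => (-1) ^ m * (z / 2) ^ (2 * m + 1) / (INR (fact m) * INR (fact (m + 1)))).

(* The kernels only use I0(sqrt s), I1(sqrt s)/sqrt s, J0(sqrt s), J1(sqrt s)/sqrt s.
   These are entire functions of s; we use their power series in s directly: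
     I0sq s = I0(sqrt s),  I1q s = I1(sqrt s)/sqrt s  (= 1/2 at s = 0),
     J0sq s = J0(sqrt s),  J1q s = J1(sqrt s)/sqrt s  (= 1/2 at s = 0),
   for s >= 0 (term-by-term identical series).  This avoids spurious
   non-differentiability of Rocq's truncated sqrt at s = 0. *)
Definition I0sq (s : R) : R := Series (fun m => s ^ m / (4 ^ m * (INR (fact m)) ^ 2)).
Definition I1q  (s : R) : R :=
  Series (fun m => s ^ m / (2 ^ (2 * m + 1) * INR (fact m) * INR (fact (m + 1)))).
Definition J0sq (s : R) : R := Series (fun m => (- s) ^ m / (4 ^ m * (INR (fact m)) ^ 2)).
Definition J1q  (s : R) : R :=
  Series (fun m => (- s) ^ m / (2 ^ (2 * m + 1) * INR (fact m) * INR (fact (m + 1)))).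

Definition Pker (eps lam q : R) (x y : R) : R :=
  let a := sqrt (lam / eps + q ^ 2) in
  (q * lam / eps) / a *
    RInt (fun tau => exp (- q * tau / 2)
                     * I0sq (lam * (2 - x - y) * (x - y - tau) / eps)
                     * sinh (a / 2 * tau)) 0 (x - y)
  - lam / eps * (1 - y) * I1q (lam * ((1 - y) ^ 2 - (1 - x) ^ 2) / eps).

Definition Qker (eps lam q : R) (x y : R) : R :=
  let b := sqrt (q ^ 2 - lam / eps) in
  (q * lam / eps) / b *
    RInt (fun tau => exp (- q * tau / 2)
                     * J0sq (lam * (2 - x - y) * (x - y - tau) / eps)
                     * sinh (b / 2 * tau)) 0 (x - y)
  - lam / eps * (1 - y) * J1q (lam * ((1 - y) ^ 2 - (1 - x) ^ 2) / eps).

Definition Kker (eps lam : R) (x y : R) : R :=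
  - lam / eps * x * I1q (lam * (x ^ 2 - y ^ 2) / eps).

Definition Lker (eps lam : R) (x y : R) : R :=
  - lam / eps * x * J1q (lam * (x ^ 2 - y ^ 2) / eps).

Definition p1 (eps lam q : R) (x : R) : R :=
  eps * Derive (fun y => Pker eps lam q x y) 0.
Definition p10 (eps lam : R) : R := - lam / (2 * eps).

Definition rr (eps lam q : R) : R := q - lam / (2 * eps).

Definition kfun (eps lam q : R) (y : R) : R :=
  rr eps lam q * Kker eps lam 1 y + Derive (fun x => Kker eps lam x y) 1.

Definition Dx (f : R -> R -> R) (x t : R) : R := Derive (fun z => f z t) x.
Definition Dt (f : R -> R -> R) (x t : R) : R := Derive (fun s => f x s) t.

Definition cont_rect (f : R -> R -> R) (a b : R) : Prop :=
  forall x t, 0 <= x <= 1 -> a < t < b ->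
  forall e : R, 0 < e -> exists del : R, 0 < del /\
    forall x' t', 0 <= x' <= 1 -> a < t' < b ->
      Rabs (x' - x) < del -> Rabs (t' - t) < del ->
      Rabs (f x' t' - f x t) < e.

Definition Uin (eps lam q : R) (uh : R -> R -> R) (tj : nat -> R) (j : nat) : R :=
  RInt (fun y => kfun eps lam q y * uh y (tj j)) 0 1.

Definition classical_on (f : R -> R -> R) (a b : R) : Prop :=
  (forall x t, 0 <= x <= 1 -> a < t < b ->
     ex_derive (fun s => f x s) t /\
     ex_derive (fun z => f z t) x /\
     ex_derive (fun z => Dx f z t) x) /\
  cont_rect f a b /\ cont_rect (Dx f) a b /\
  cont_rect (Dx (Dx f)) a b /\ cont_rect (Dt f) a b.

Definition closed_loop (eps lam q : R) (u uh : R -> R -> R) (tj : nat -> R) : Prop :=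
  forall j : nat,
    classical_on u (tj j) (tj (S j)) /\
    classical_on uh (tj j) (tj (S j)) /\
    forall t, tj j < t < tj (S j) ->
      (forall x, 0 <= x <= 1 ->
         Dt u x t = eps * Dx (Dx u) x t + lam * u x t) /\
      Dx u 0 t = 0 /\
      Dx u 1 t + q * u 1 t = Uin eps lam q uh tj j /\
      (forall x, 0 <= x <= 1 ->
         Dt uh x t = eps * Dx (Dx uh) x t + lam * uh x t
                     + p1 eps lam q x * (u 0 t - uh 0 t)) /\
      Dx uh 0 t = p10 eps lam * (u 0 t - uh 0 t) /\
      Dx uh 1 t + q * uh 1 t = Uin eps lam q uh tj j.

Definition utilde (u uh : R -> R -> R) (x t : R) : R := u x t - uh x t.
Definition wtilde (eps lam q : R) (u uh : R -> R -> R) (x t : R) : R :=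
  utilde u uh x t + RInt (fun y => Qker eps lam q x y * utilde u uh y t) 0 x.
Definition what (eps lam : R) (uh : R -> R -> R) (x t : R) : R :=
  uh x t - RInt (fun y => Kker eps lam x y * uh y t) 0 x.

Definition dhold (eps lam q : R) (uh : R -> R -> R) (tj : nat -> R) (j : nat) (t : R) : R :=
  RInt (fun y => kfun eps lam q y * (uh y (tj j) - uh y t)) 0 1.

Definition rho1 (eps lam q : R) : R := 6 * eps ^ 2 * (kfun eps lam q 1) ^ 2.

Definition alpha1 (eps lam q : R) : R :=
  let k := kfun eps lam q in
  3 * (1 + sqrt (RInt (fun x => RInt (fun y => (Lker eps lam x y) ^ 2) 0 x) 0 1)) ^ 2
    * RInt (fun y => (eps * Derive (Derive k) y + eps * k 1 * k y + lam * k y) ^ 2) 0 1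
  + 6 * (eps * q * k 1 + eps * Derive k 1) ^ 2
    * RInt (fun y => (Lker eps lam 1 y) ^ 2) 0 1.

Definition alpha2 (eps lam q : R) : R :=
  let k := kfun eps lam q in 6 * (eps * q * k 1 + eps * Derive k 1) ^ 2.

Definition alpha3 (eps lam q : R) : R :=
  let k := kfun eps lam q in
  6 * (lam * k 0 / 2 + RInt (fun y => k y * p1 eps lam q y) 0 1) ^ 2.

(* Only û(·,t) depends on t, so
   ḋ = −∫₀¹ k ∂ₜû.  Substituting the observer PDE and integrating by parts twice
   (k'(0) = 0 and the boundary conditions of the observer) gives
     ḋ = −εk(1) d − ∫₀¹ (εk'' + εk(1)k + λk) û + β û(1) − γ ũ(0),
   with β = εqk(1) + εk'(1) and γ = λk(0)/2 + ∫₀¹ k p₁.  The backstepping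
   transformation ŵ = û − ∫₀ˣ K û is inverted by û = ŵ + ∫₀ˣ L ŵ; this rests on
   the kernel identity L − K = ∫ L K, a consequence of the convolution identity
   (J * I)(z) = 2 (I(z) − J(z)) between the entire series I = I1q and J = J1q,
   itself proved from the integral equations these series satisfy.  The inverse
   transform gives ‖û‖ ≤ (1 + √M) ‖ŵ‖ and (û(1) − ŵ(1))² ≤ ∫₀¹ L(1,·)² ‖ŵ‖²;
   Cauchy–Schwarz and (a₁+…+a₅)² ≤ 6a₁² + 3a₂² + 6a₃² + 6a₄² + 6a₅² conclude.
   (If the held integral ∫₀¹ k û(·,t_j) does not exist, d is locally constant.) *)

From Pilot Require Import Defs.
From Stdlib Require Import Reals Lra Lia Psatz FunctionalExtensionality PropExtensionality Classical Factorial.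
From Coquelicot Require Import Coquelicot.
Open Scope R_scope.

(** * 1. Continuity and calculus toolkit *)

(* Continuity at every point, for functions of one and of two real variables.
   All functions met below (series, kernels, clamped states) are globally continuous. *)
Definition cont1 (f : R -> R) : Prop := forall x, continuity_pt f x.
Definition cont2 (f : R -> R -> R) : Prop := forall x y, continuity_2d_pt f x y.

Lemma cont1_continuous (f : R -> R) : cont1 f -> forall x, continuous f x.
Proof. intros H x; apply continuity_pt_filterlim, H. Qed.

Lemma ex_RInt_cont1 (f : R -> R) (a b : R) : cont1 f -> ex_RInt f a b.
Proof.
  intros H; apply (ex_RInt_continuous (V:=R_CompleteNormedModule)).
  intros; apply cont1_continuous, H.
Qed.

Lemma cont1_plus (f g : R -> R) : cont1 f -> cont1 g -> cont1 (fun x => f x + g x).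
Proof. intros H1 H2 x; apply (continuity_pt_plus f g); auto. Qed.
Lemma cont1_minus (f g : R -> R) : cont1 f -> cont1 g -> cont1 (fun x => f x - g x).
Proof. intros H1 H2 x; apply (continuity_pt_minus f g); auto. Qed.
Lemma cont1_mult (f g : R -> R) : cont1 f -> cont1 g -> cont1 (fun x => f x * g x).
Proof. intros H1 H2 x; apply (continuity_pt_mult f g); auto. Qed.
Lemma cont1_opp (f : R -> R) : cont1 f -> cont1 (fun x => - f x).
Proof. intros H1 x; apply (continuity_pt_opp f); auto. Qed.
Lemma cont1_const (c : R) : cont1 (fun _ => c).
Proof. intros x; apply continuity_pt_const; intros ? ?; auto. Qed.
Lemma cont1_id : cont1 (fun x => x).
Proof. intros x; apply continuity_pt_id. Qed.
Lemma cont1_comp (f g : R -> R) : cont1 f -> cont1 g -> cont1 (fun x => g (f x)).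
Proof. intros H1 H2 x; apply (continuity_pt_comp f g); auto. Qed.
Lemma cont1_pow (f : R -> R) (n : nat) : cont1 f -> cont1 (fun x => f x ^ n).
Proof.
  intros H. apply (cont1_comp f (fun y => y ^ n)); auto.
  intros y; apply derivable_continuous_pt, derivable_pt_pow.
Qed.
Lemma cont1_ext (f g : R -> R) : (forall x, f x = g x) -> cont1 f -> cont1 g.
Proof. intros H Hf. replace g with f; auto. apply functional_extensionality; auto. Qed.

Ltac cont1_tac := repeat first [assumption | apply cont1_const | apply cont1_id
  | apply cont1_plus | apply cont1_minus | apply cont1_mult | apply cont1_opp | apply cont1_pow].

Lemma cont2_plus (f g : R -> R -> R) : cont2 f -> cont2 g -> cont2 (fun x y => f x y + g x y).
Proof. intros H1 H2 x y; apply continuity_2d_pt_plus; auto. Qed.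
Lemma cont2_minus (f g : R -> R -> R) : cont2 f -> cont2 g -> cont2 (fun x y => f x y - g x y).
Proof. intros H1 H2 x y; apply continuity_2d_pt_minus; auto. Qed.
Lemma cont2_mult (f g : R -> R -> R) : cont2 f -> cont2 g -> cont2 (fun x y => f x y * g x y).
Proof. intros H1 H2 x y; apply continuity_2d_pt_mult; auto. Qed.
Lemma cont2_opp (f : R -> R -> R) : cont2 f -> cont2 (fun x y => - f x y).
Proof. intros H1 x y; apply continuity_2d_pt_opp; auto. Qed.
Lemma cont2_const (c : R) : cont2 (fun _ _ => c).
Proof. intros x y; apply continuity_2d_pt_const. Qed.
Lemma cont2_id1 : cont2 (fun u _ => u).
Proof. intros x y; apply continuity_2d_pt_id1. Qed.
Lemma cont2_id2 : cont2 (fun _ v => v).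
Proof. intros x y; apply continuity_2d_pt_id2. Qed.
Lemma cont2_1 (f : R -> R) : cont1 f -> cont2 (fun x _ => f x).
Proof. intros H x y. apply (continuity_1d_2d_pt_comp f (fun u _ => u)); auto. apply continuity_2d_pt_id1. Qed.
Lemma cont2_2 (f : R -> R) : cont1 f -> cont2 (fun _ y => f y).
Proof. intros H x y. apply (continuity_1d_2d_pt_comp f (fun _ v => v)); auto. apply continuity_2d_pt_id2. Qed.
Lemma cont2_comp (f : R -> R -> R) (g : R -> R) : cont2 f -> cont1 g -> cont2 (fun x y => g (f x y)).
Proof. intros H1 H2 x y. apply continuity_1d_2d_pt_comp; auto. Qed.
Lemma cont2_pow (f : R -> R -> R) (n : nat) : cont2 f -> cont2 (fun u v => f u v ^ n).
Proof. intros H. apply (cont2_comp f (fun y => y ^ n)); auto. apply cont1_pow, cont1_id. Qed.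
Lemma cont2_swap (f : R -> R -> R) : cont2 f -> cont2 (fun x y => f y x).
Proof. intros H x y e. destruct (H y x e) as [d Hd]. exists d. intros u v Hu Hv. apply Hd; auto. Qed.

Ltac cont2_tac := repeat first [assumption | apply cont2_const | apply cont2_id1 | apply cont2_id2
  | apply cont2_mult | apply cont2_plus | apply cont2_minus | apply cont2_opp | apply cont2_pow].

Lemma cont2_sect (f : R -> R -> R) (x : R) : cont2 f -> cont1 (f x).
Proof.
  intros H y e He. destruct (H x y (mkposreal e He)) as [d Hd].
  exists d; split. apply cond_pos.
  intros z [_ Hz]. simpl in *. unfold R_dist in *. apply Hd.
  rewrite Rminus_eq_0, Rabs_R0; apply cond_pos. exact Hz.
Qed.
Lemma cont2_sect1 (f : R -> R -> R) (y : R) : cont2 f -> cont1 (fun x => f x y).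
Proof.
  intros H x e He. destruct (H x y (mkposreal e He)) as [d Hd].
  exists d; split. apply cond_pos.
  intros z [_ Hz]. simpl in *. unfold R_dist in *. apply Hd. exact Hz.
  rewrite Rminus_eq_0, Rabs_R0; apply cond_pos.
Qed.

(* Real-valued forms of Coquelicot's derivative rules, whose generic statements
   (over a normed module) do not unify syntactically with goals on R. *)
Lemma der_plus (f g : R -> R) (x df dg : R) : is_derive f x df -> is_derive g x dg ->
  is_derive (fun y => f y + g y) x (df + dg).
Proof. intros; exact (is_derive_plus f g x df dg H H0). Qed.
Lemma der_minus (f g : R -> R) (x df dg : R) : is_derive f x df -> is_derive g x dg ->
  is_derive (fun y => f y - g y) x (df - dg).
Proof. intros; exact (is_derive_minus f g x df dg H H0). Qed.
Lemma der_mult (f g : R -> R) (x df dg : R) : is_derive f x df -> is_derive g x dg ->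
  is_derive (fun y => f y * g y) x (df * g x + f x * dg).
Proof. intros; exact (is_derive_mult f g x df dg H H0 Rmult_comm). Qed.
Lemma der_comp (f g : R -> R) (x df dg : R) : is_derive f (g x) df -> is_derive g x dg ->
  is_derive (fun y => f (g y)) x (dg * df).
Proof. intros; exact (is_derive_comp f g x df dg H H0). Qed.
Lemma der_const (c x : R) : is_derive (fun _ => c) x 0.
Proof. exact (is_derive_const c x). Qed.
Lemma der_id (x : R) : is_derive (fun y => y) x 1.
Proof. exact (is_derive_id x). Qed.
Lemma der_scal (f : R -> R) (x k df : R) : is_derive f x df -> is_derive (fun y => k * f y) x (k * df).
Proof. apply is_derive_scal. Qed.
Lemma der_eq (f : R -> R) (x l l' : R) : is_derive f x l -> l = l' -> is_derive f x l'.
Proof. intros H ->; exact H. Qed.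
Lemma der_ext (f g : R -> R) (x l : R) : (forall y, f y = g y) -> is_derive f x l -> is_derive g x l.
Proof. apply is_derive_ext. Qed.
Lemma der_pow (f : R -> R) (x : R) (n : nat) (df : R) : is_derive f x df ->
  is_derive (fun y => f y ^ n) x (INR n * f x ^ (pred n) * df).
Proof.
  intros H. apply (der_eq _ _ (df * (INR n * f x ^ pred n))). 2: ring.
  apply (der_comp (fun y => y ^ n) f x); auto.
  apply is_derive_Reals, derivable_pt_lim_pow.
Qed.

Lemma cont1_of_derive (f df : R -> R) : (forall x, is_derive f x (df x)) -> cont1 f.
Proof.
  intros H x. apply continuity_pt_filterlim. apply (ex_derive_continuous (V:=R_NormedModule)).
  eexists; apply H.
Qed.

(* Real-valued forms of Coquelicot's rules for the Riemann integral (same reason). *)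
Lemma RIntR_ext (f g : R -> R) (a b : R) :
  (forall x, Rmin a b < x < Rmax a b -> f x = g x) -> RInt f a b = RInt g a b.
Proof. apply RInt_ext. Qed.
Lemma ex_RIntR_ext (f g : R -> R) (a b : R) :
  (forall x, Rmin a b < x < Rmax a b -> f x = g x) -> ex_RInt f a b -> ex_RInt g a b.
Proof. apply ex_RInt_ext. Qed.
Lemma ex_RIntR_plus (f g : R -> R) (a b : R) :
  ex_RInt f a b -> ex_RInt g a b -> ex_RInt (fun x => f x + g x) a b.
Proof. intros; exact (ex_RInt_plus f g a b H H0). Qed.
Lemma ex_RIntR_scal (f : R -> R) (a b k : R) : ex_RInt f a b -> ex_RInt (fun x => k * f x) a b.
Proof. intros; exact (ex_RInt_scal f a b k H). Qed.
Lemma RIntR_plus (f g : R -> R) (a b : R) : ex_RInt f a b -> ex_RInt g a b ->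
  RInt (fun x => f x + g x) a b = RInt f a b + RInt g a b.
Proof. intros; exact (RInt_plus f g a b H H0). Qed.
Lemma RIntR_minus (f g : R -> R) (a b : R) : ex_RInt f a b -> ex_RInt g a b ->
  RInt (fun x => f x - g x) a b = RInt f a b - RInt g a b.
Proof. intros; exact (RInt_minus f g a b H H0). Qed.
Lemma RIntR_scal (f : R -> R) (a b k : R) : ex_RInt f a b -> RInt (fun x => k * f x) a b = k * RInt f a b.
Proof. intros; exact (RInt_scal f a b k H). Qed.
Lemma RIntR_scal_r (f : R -> R) (a b k : R) : ex_RInt f a b -> RInt (fun x => f x * k) a b = RInt f a b * k.
Proof. intros. rewrite Rmult_comm, <- RIntR_scal; auto. apply RIntR_ext; intros; apply Rmult_comm. Qed.
Lemma RIntR_opp (f : R -> R) (a b : R) : ex_RInt f a b -> RInt (fun x => - f x) a b = - RInt f a b.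
Proof. intros; exact (RInt_opp f a b H). Qed.
Lemma RIntR_swap (f : R -> R) (a b : R) : ex_RInt f a b -> RInt f b a = - RInt f a b.
Proof. intros; symmetry; exact (opp_RInt_swap f a b H). Qed.
Lemma RIntR_point (f : R -> R) (a : R) : RInt f a a = 0.
Proof. exact (RInt_point a f). Qed.
Lemma RIntR_const (c a b : R) : RInt (fun _ => c) a b = (b - a) * c.
Proof. exact (RInt_const a b c). Qed.
Lemma RIntR_Chasles (f : R -> R) (a b c : R) : ex_RInt f a b -> ex_RInt f b c ->
  RInt f a b + RInt f b c = RInt f a c.
Proof. intros; exact (RInt_Chasles f a b c H H0). Qed.

Lemma RInt_not_ex (f g : R -> R) (a b : R) : ~ ex_RInt f a b -> ~ ex_RInt g a b -> RInt f a b = RInt g a b.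
Proof.
  intros Hf Hg. unfold RInt.
  assert (E : is_RInt (V:=R_CompleteNormedModule) f a b = is_RInt g a b).
  { apply functional_extensionality; intros l. apply propositional_extensionality; split; intros H.
    exfalso; apply Hf; exists l; auto. exfalso; apply Hg; exists l; auto. }
  rewrite E; reflexivity.
Qed.

Lemma der_RInt (f : R -> R) (a x : R) : cont1 f -> is_derive (fun z => RInt f a z) x (f x).
Proof.
  intros H. apply (is_derive_RInt f (fun z => RInt f a z) a x).
  - apply filter_forall; intros. apply (RInt_correct (V:=R_CompleteNormedModule)). apply ex_RInt_cont1, H.
  - apply cont1_continuous, H.
Qed.

Lemma const_of_zero_derive (h : R -> R) (z : R) : (forall x, is_derive h x 0) -> h z = h 0.
Proof.
  intros Hd.
  destruct (MVT_gen h 0 z (fun _ => 0)) as [c [_ Hc]].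
  - intros; apply Hd.
  - intros; apply continuity_pt_filterlim, (ex_derive_continuous (V:=R_NormedModule)); eexists; apply Hd.
  - lra.
Qed.

Lemma RInt_01_of_derive (g dg dgc : R -> R) :
  (forall x, 0 <= x <= 1 -> is_derive g x (dg x)) ->
  (forall x, 0 <= x <= 1 -> dg x = dgc x) -> cont1 dgc ->
  RInt dgc 0 1 = g 1 - g 0.
Proof.
  intros Hd Heq Hc.
  destruct (MVT_gen (fun x => g x - RInt dgc 0 x) 0 1 (fun _ => 0)) as [c [_ Hcc]].
  - intros x Hx. rewrite Rmin_left, Rmax_right in Hx by lra.
    apply (der_eq _ _ (dg x - dgc x)). 2: rewrite Heq; lra.
    apply (der_minus g (fun x => RInt dgc 0 x)). apply Hd; lra. apply der_RInt; auto.
  - intros x Hx. rewrite Rmin_left, Rmax_right in Hx by lra.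
    apply continuity_pt_filterlim, (ex_derive_continuous (V:=R_NormedModule) (fun x => g x - RInt dgc 0 x)).
    eexists. apply (der_minus g (fun x => RInt dgc 0 x)). apply Hd; lra. apply der_RInt; auto.
  - rewrite RIntR_point in Hcc. lra.
Qed.

Lemma der_RInt_param_bounds (f df : R -> R -> R) (a b da db : R -> R) (x : R) :
  (forall u v, is_derive (fun z => f z v) u (df u v)) ->
  cont2 df ->
  (forall u, cont1 (f u)) ->
  is_derive a x (da x) -> is_derive b x (db x) ->
  is_derive (fun z => RInt (f z) (a z) (b z)) x
    (RInt (df x) (a x) (b x) - f x (a x) * da x + f x (b x) * db x).
Proof.
  intros Hd Hc Hf Ha Hb.
  assert (HD : forall u v, Derive (fun z => f z v) u = df u v).
  { intros; apply is_derive_unique, Hd. }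
  assert (HC : forall u v, continuity_2d_pt (fun u v => Derive (fun z => f z v) u) u v).
  { intros u v; apply continuity_2d_pt_ext with (f := df). intros; rewrite HD; auto. apply Hc. }
  assert (HR : forall y a b, ex_RInt (fun t => f y t) a b).
  { intros; apply ex_RInt_cont1, Hf. }
  replace (RInt (df x) (a x) (b x) - f x (a x) * da x + f x (b x) * db x) with
    (RInt (fun t => Derive (fun u => f u t) x) (a x) (b x) + - f x (a x) * da x + f x (b x) * db x).
  2: { rewrite (RIntR_ext _ (df x)); [ring | intros; apply HD]. }
  apply (is_derive_RInt_param_bound_comp f a b x (da x) (db x)).
  - apply filter_forall; intros; apply HR.
  - exists (mkposreal 1 Rlt_0_1). apply filter_forall; intros; apply HR.
  - exists (mkposreal 1 Rlt_0_1). apply filter_forall; intros; apply HR.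
  - exact Ha.
  - exact Hb.
  - exists (mkposreal 1 Rlt_0_1). apply filter_forall; intros; eexists; apply Hd.
  - intros; apply HC.
  - exists (mkposreal 1 Rlt_0_1); intros; apply HC.
  - exists (mkposreal 1 Rlt_0_1); intros; apply HC.
  - apply Hf.
  - apply Hf.
Qed.

Lemma RInt_sq_ge0 (f : R -> R) (a b : R) : a <= b -> cont1 f -> 0 <= RInt (fun x => f x ^ 2) a b.
Proof.
  intros Hab Hf. apply RInt_ge_0; auto. apply ex_RInt_cont1, cont1_pow; auto.
  intros; nra.
Qed.

Lemma RInt_cauchy_schwarz (f g : R -> R) (a b : R) : a <= b -> cont1 f -> cont1 g ->
  (RInt (fun x => f x * g x) a b) ^ 2 <= RInt (fun x => f x ^ 2) a b * RInt (fun x => g x ^ 2) a b.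
Proof.
  intros Hab Hf Hg.
  set (A := RInt (fun x => f x ^ 2) a b). set (B := RInt (fun x => g x ^ 2) a b).
  set (C := RInt (fun x => f x * g x) a b).
  (* the quadratic l ↦ ∫ (f − l g)² is nonnegative *)
  assert (Hq : forall l, 0 <= A - 2 * l * C + l ^ 2 * B).
  { intros l.
    assert (E : RInt (fun x => (f x - l * g x) ^ 2) a b = A - 2 * l * C + l ^ 2 * B).
    { unfold A, B, C.
      rewrite (RIntR_ext _ (fun x => f x ^ 2 - (2 * l) * (f x * g x) + l ^ 2 * g x ^ 2)).
      2: intros; ring.
      rewrite RIntR_plus, RIntR_minus, !RIntR_scal; auto; apply ex_RInt_cont1; cont1_tac. }
    rewrite <- E. apply RInt_sq_ge0; auto. cont1_tac. }
  assert (HB : 0 <= B) by (apply RInt_sq_ge0; auto).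
  destruct (Req_dec B 0) as [HB0|HB0].
  - destruct (Req_dec C 0) as [HC0|HC0].
    + rewrite HC0, HB0. nra.
    + exfalso. specialize (Hq ((A + 1) / (2 * C))). rewrite HB0 in Hq.
      assert (A - 2 * ((A + 1) / (2 * C)) * C = -1) by (field; auto). nra.
  - specialize (Hq (C / B)).
    assert (E : A - 2 * (C / B) * C + (C / B) ^ 2 * B = (A * B - C ^ 2) / B) by (field; auto).
    rewrite E in Hq.
    assert (0 <= A * B - C ^ 2).
    { apply Rmult_le_reg_r with (r := / B). apply Rinv_0_lt_compat; lra.
      rewrite Rmult_0_l. exact Hq. }
    lra.
Qed.

(** * 2. The Bessel series and their convolution identity *)

Definition entire (a : nat -> R) : Prop := CV_radius a = p_infty.

Lemma entire_lt (a : nat -> R) (x : R) : entire a -> Rbar_lt (Rabs x) (CV_radius a).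
Proof. intros H; rewrite H; simpl; auto. Qed.
Lemma entire_derive (a : nat -> R) : entire a -> entire (PS_derive a).
Proof. unfold entire; intros; rewrite CV_radius_derive; auto. Qed.
Lemma entire_Int (a : nat -> R) : entire a -> entire (PS_Int a).
Proof. unfold entire; intros; rewrite CV_radius_Int; auto. Qed.

Lemma PS_cont1 (a : nat -> R) : entire a -> cont1 (PSeries a).
Proof. intros H x; apply PSeries_continuity, entire_lt, H. Qed.
Lemma PS_der (a : nat -> R) (x : R) : entire a -> is_derive (PSeries a) x (PSeries (PS_derive a) x).
Proof. intros H; apply is_derive_PSeries, entire_lt, H. Qed.
Lemma PS_RInt (a : nat -> R) (x : R) : entire a -> RInt (PSeries a) 0 x = PSeries (PS_Int a) x.
Proof. intros H; apply is_RInt_unique, is_RInt_PSeries, entire_lt, H. Qed.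

Lemma entire_of_ratio (a : nat -> R) (c : R) :
  (forall n, a n <> 0) ->
  (forall n, Rabs (a (S n) / a n) = c * / (4 * INR (S n) * INR (S (S n)))) -> entire a.
Proof.
  intros Hnz Hratio. apply CV_radius_infinite_DAlembert; auto.
  apply is_lim_seq_ext with (u := fun n => c * / (4 * INR (S n) * INR (S (S n)))).
  { intros n; symmetry; apply Hratio. }
  replace (Finite 0) with (Rbar_mult c 0) by (simpl; f_equal; ring).
  apply is_lim_seq_scal_l.
  apply is_lim_seq_le_le with (u := fun _ => 0) (w := fun n => / INR (S n)).
  - intros n. pose proof (pos_INR n). rewrite !S_INR. split.
    + apply Rlt_le, Rinv_0_lt_compat. nra.
    + apply Rinv_le_contravar. lra. nra.
  - apply is_lim_seq_const.
  - apply (is_lim_seq_incr_1 (fun n => / INR n)).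
    replace (Finite 0) with (Rbar_inv p_infty) by reflexivity.
    apply is_lim_seq_inv. apply is_lim_seq_INR. discriminate.
Qed.

Lemma PSeries_lin (b : nat -> R) (x : R) :
  b 0%nat = 0 -> (forall n, b (S (S n)) = 0) -> PSeries b x = b 1%nat * x.
Proof.
  intros H0 H2. apply is_series_unique.
  apply is_series_decr_1, is_series_decr_1.
  match goal with |- is_series _ ?l => replace l with 0 by (unfold plus, opp; simpl; rewrite H0; ring) end.
  apply is_series_ext with (a := fun n => (/2) ^ n * 0).
  { intros n. simpl. rewrite H2. ring. }
  assert (Hg : Rabs (/2) < 1) by (rewrite Rabs_pos_eq; lra).
  pose proof (is_series_scal_r 0 _ _ (is_series_geom _ Hg)) as Hz.
  rewrite Rmult_0_r in Hz. exact Hz.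
Qed.

(* Coefficients of s ↦ I₁(√s)/√s (sg = 1) and s ↦ J₁(√s)/√s (sg = −1). *)
Definition bessel_coef (sg : R) (m : nat) : R :=
  sg ^ m / (2 ^ (2 * m + 1) * INR (fact m) * INR (fact (m + 1))).

Lemma I1q_PS (s : R) : I1q s = PSeries (bessel_coef 1) s.
Proof. unfold I1q, PSeries, bessel_coef. apply Series_ext; intros; rewrite pow1; unfold Rdiv; ring. Qed.
Lemma J1q_PS (s : R) : J1q s = PSeries (bessel_coef (-1)) s.
Proof.
  unfold J1q, PSeries, bessel_coef. apply Series_ext; intros n.
  replace (-s) with (-1 * s) by ring; rewrite Rpow_mult_distr; unfold Rdiv; ring.
Qed.

Lemma bessel_coef_S (sg : R) (n : nat) :
  bessel_coef sg (S n) = sg * bessel_coef sg n / (4 * INR (S n) * INR (S (S n))).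
Proof.
  unfold bessel_coef.
  replace (2 * S n + 1)%nat with (S (S (2 * n + 1))) by lia.
  replace (S n + 1)%nat with (S (S n)) by lia.
  replace (n + 1)%nat with (S n) by lia.
  rewrite !fact_simpl, !mult_INR.
  change (2 ^ S (S (2 * n + 1))) with (2 * (2 * 2 ^ (2 * n + 1))).
  change (sg ^ S n) with (sg * sg ^ n).
  pose proof (INR_fact_lt_0 n). pose proof (pos_INR n).
  assert (0 < 2 ^ (2 * n + 1)) by (apply pow_lt; lra).
  rewrite !S_INR. field. repeat split; lra.
Qed.

Lemma entire_bessel_coef (sg : R) : sg <> 0 -> entire (bessel_coef sg).
Proof.
  intros Hsg.
  assert (Hnz : forall n, bessel_coef sg n <> 0).
  { intros n. unfold bessel_coef. pose proof (INR_fact_lt_0 n). pose proof (INR_fact_lt_0 (n + 1)).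
    assert (0 < 2 ^ (2 * n + 1)) by (apply pow_lt; lra).
    apply Rmult_integral_contrapositive; split. apply pow_nonzero; auto.
    apply Rinv_neq_0_compat. apply Rgt_not_eq, Rlt_gt.
    repeat apply Rmult_lt_0_compat; lra. }
  apply (entire_of_ratio _ (Rabs sg)); auto. intros n.
  rewrite bessel_coef_S. pose proof (pos_INR n). specialize (Hnz n).
  rewrite !S_INR.
  replace (sg * bessel_coef sg n / (4 * (INR n + 1) * (INR n + 1 + 1)) / bessel_coef sg n)
    with (sg * / (4 * (INR n + 1) * (INR n + 1 + 1))) by (field; repeat split; lra).
  rewrite Rabs_mult, (Rabs_pos_eq (/ _)); auto.
  apply Rlt_le, Rinv_0_lt_compat; nra.
Qed.

(* The integral equation s·B(s) = s/2 + (sg/4)·∫₀ˢ∫₀ᵘ B, for B the series with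
   coefficients bessel_coef sg, read off coefficientwise from bessel_coef_S. *)
Lemma bessel_integral_equation (sg x : R) : sg <> 0 ->
  x * PSeries (bessel_coef sg) x = x / 2 + sg / 4 * PSeries (PS_Int (PS_Int (bessel_coef sg))) x.
Proof.
  intros Hsg. set (a := bessel_coef sg).
  assert (Ha : entire a) by (apply entire_bessel_coef; auto).
  rewrite <- PSeries_incr_1, <- (PSeries_scal (sg / 4)).
  assert (E1 : ex_pseries (PS_incr_1 a) x).
  { apply ex_pseries_incr_1, CV_radius_inside, entire_lt, Ha. }
  assert (E2 : ex_pseries (PS_scal (sg / 4) (PS_Int (PS_Int a))) x).
  { apply ex_pseries_scal. apply Rmult_comm. apply CV_radius_inside, entire_lt, entire_Int, entire_Int, Ha. }
  enough (PSeries (PS_incr_1 a) x - PSeries (PS_scal (sg / 4) (PS_Int (PS_Int a))) x = x / 2) by lra.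
  rewrite <- PSeries_minus; auto. rewrite PSeries_lin.
  - unfold PS_minus, PS_incr_1, PS_scal, PS_Int, plus, opp, scal, mult; cbn -[INR a pow].
    unfold a, bessel_coef; simpl. field.
  - unfold PS_minus, PS_incr_1, PS_scal, PS_Int, plus, opp, scal, mult; cbn -[INR a pow]. ring.
  - intros n. unfold PS_minus, PS_incr_1, PS_scal, PS_Int, plus, opp, scal, mult; cbn -[INR a pow].
    unfold a. rewrite bessel_coef_S. pose proof (pos_INR n). rewrite !S_INR. field. lra.
Qed.

Definition conv (f g : R -> R) (z : R) : R := RInt (fun w => f (z - w) * g w) 0 z.
Definition antider (f : R -> R) (z : R) : R := RInt f 0 z.
Definition C1 (f df : R -> R) : Prop := (forall x, is_derive f x (df x)) /\ cont1 df.

Lemma C1_cont1 (f df : R -> R) : C1 f df -> cont1 f.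
Proof. intros [H _]; apply (cont1_of_derive f df H). Qed.

Lemma antider_C1 (f : R -> R) : cont1 f -> C1 (antider f) f.
Proof. intros H; split; auto. intros x; apply der_RInt, H. Qed.

Lemma antider_cont1 (f : R -> R) : cont1 f -> cont1 (antider f).
Proof. intros H; apply (C1_cont1 _ _ (antider_C1 f H)). Qed.

Lemma antider_ext (f g : R -> R) (z : R) : (forall x, f x = g x) -> antider f z = antider g z.
Proof. intros H; unfold antider; apply RIntR_ext; intros; auto. Qed.

Lemma conv_integrand_cont1 (f g : R -> R) (z : R) : cont1 f -> cont1 g -> cont1 (fun w => f (z - w) * g w).
Proof.
  intros Hf Hg. apply cont1_mult; auto.
  apply (cont1_comp (fun w => z - w) f); auto. cont1_tac.
Qed.

Lemma conv_der (f df g : R -> R) (z : R) : C1 f df -> cont1 g ->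
  is_derive (conv f g) z (f 0 * g z + conv df g z).
Proof.
  intros [Hd Hc] Hg. unfold conv.
  apply (der_eq _ _ (RInt (fun w => df (z - w) * g w) 0 z - f (z - 0) * g 0 * 0 + f (z - z) * g z * 1)).
  2: { rewrite Rminus_eq_0. ring. }
  apply (der_RInt_param_bounds (fun z w => f (z - w) * g w) (fun z w => df (z - w) * g w)
    (fun _ => 0) (fun z => z) (fun _ => 0) (fun _ => 1) z).
  - intros u v. apply (der_eq _ _ ((1 * df (u - v)) * g v + f (u - v) * 0)). 2: ring.
    apply (der_mult (fun y => f (y - v)) (fun _ => g v)). 2: apply der_const.
    apply (der_comp f (fun y => y - v)). apply Hd.
    apply (der_eq _ _ (1 - 0)). 2: ring. apply der_minus. apply der_id. apply der_const.
  - apply cont2_mult. 2: apply cont2_2, Hg.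
    apply cont2_comp; auto. apply cont2_minus; [apply cont2_id1 | apply cont2_id2].
  - intros u. apply conv_integrand_cont1; auto. apply (cont1_of_derive f df Hd).
  - apply der_const.
  - apply der_id.
Qed.

(* Convolution is commutative (substitution w ↦ z − w). *)
Lemma conv_comm (f g : R -> R) (z : R) : cont1 f -> cont1 g -> conv f g z = conv g f z.
Proof.
  intros Hf Hg. unfold conv.
  assert (Hi : ex_RInt (fun w => f (z - w) * g w) 0 z)
    by (apply ex_RInt_cont1, conv_integrand_cont1; auto).
  assert (H := RInt_comp_lin (fun w => f (z - w) * g w) (-1) z 0 z).
  replace (-1 * 0 + z) with z in H by ring.
  replace (-1 * z + z) with 0 in H by ring.
  rewrite (RIntR_swap _ 0 z Hi) in H.
  assert (E : RInt (fun y => scal (-1) (f (z - (-1 * y + z)) * g (-1 * y + z))) 0 z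
    = - RInt (fun w => g (z - w) * f w) 0 z).
  { rewrite <- RIntR_opp. apply RIntR_ext. intros; unfold scal; simpl; unfold mult; simpl.
    replace (z - (-1 * x + z)) with x by ring. replace (-1 * x + z) with (z - x) by ring. ring.
    apply ex_RInt_cont1, conv_integrand_cont1; auto. }
  assert (H2 : - RInt (fun w => g (z - w) * f w) 0 z = - RInt (fun w => f (z - w) * g w) 0 z).
  { rewrite <- E. apply H. apply ex_RInt_cont1, conv_integrand_cont1; auto. }
  lra.
Qed.

Lemma conv_cont1 (f g dg : R -> R) : cont1 f -> C1 g dg -> cont1 (conv f g).
Proof.
  intros Hf Hg. assert (E : conv f g = conv g f).
  { apply functional_extensionality; intros; apply conv_comm; auto. apply (C1_cont1 _ _ Hg). }
  rewrite E. apply (cont1_of_derive _ (fun z => g 0 * f z + conv dg f z)).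
  intros; apply conv_der; auto.
Qed.

Lemma antider_conv (f g dg : R -> R) (z : R) : cont1 f -> C1 g dg ->
  conv (antider f) g z = antider (conv f g) z.
Proof.
  intros Hf Hg.
  assert (Hgc := C1_cont1 _ _ Hg).
  assert (H0 : forall x, is_derive (fun z => conv (antider f) g z - antider (conv f g) z) x 0).
  { intros x. apply (der_eq _ _ ((antider f 0 * g x + conv f g x) - conv f g x)).
    2: unfold antider; rewrite RIntR_point; ring.
    apply der_minus.
    - apply conv_der; auto. apply antider_C1; auto.
    - apply der_RInt. apply (conv_cont1 _ _ dg); auto. }
  pose proof (const_of_zero_derive _ z H0) as E. unfold conv, antider in E |- *.
  rewrite !RIntR_point in E. lra.
Qed.

Lemma conv_id (g dg : R -> R) (z : R) : C1 g dg -> conv (fun w => w) g z = antider (antider g) z.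
Proof.
  intros Hg.
  assert (E : (fun w : R => w) = antider (fun _ => 1)).
  { apply functional_extensionality; intros w; unfold antider; rewrite RIntR_const; ring. }
  rewrite E, (antider_conv _ _ dg); auto. 2: apply cont1_const.
  apply antider_ext. intros y; unfold conv, antider. apply RIntR_ext; intros; ring.
Qed.

Definition Ifun : R -> R := PSeries (bessel_coef 1).
Definition Jfun : R -> R := PSeries (bessel_coef (-1)).
Definition dI : R -> R := PSeries (PS_derive (bessel_coef 1)).
Definition dJ : R -> R := PSeries (PS_derive (bessel_coef (-1))).

Lemma entire_I : entire (bessel_coef 1).
Proof. apply entire_bessel_coef; lra. Qed.
Lemma entire_J : entire (bessel_coef (-1)).
Proof. apply entire_bessel_coef; lra. Qed.

Lemma I_C1 : C1 Ifun dI.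
Proof. split. intros; apply PS_der, entire_I. apply PS_cont1, entire_derive, entire_I. Qed.
Lemma J_C1 : C1 Jfun dJ.
Proof. split. intros; apply PS_der, entire_J. apply PS_cont1, entire_derive, entire_J. Qed.
Lemma I_cont1 : cont1 Ifun. Proof. apply (C1_cont1 _ _ I_C1). Qed.
Lemma J_cont1 : cont1 Jfun. Proof. apply (C1_cont1 _ _ J_C1). Qed.

Lemma antider2_PS (a : nat -> R) (w : R) : entire a ->
  antider (antider (PSeries a)) w = PSeries (PS_Int (PS_Int a)) w.
Proof.
  intros H. unfold antider at 1. rewrite <- PS_RInt. 2: apply entire_Int, H.
  apply RIntR_ext; intros. unfold antider; apply PS_RInt, H.
Qed.

Lemma I_integral_eq (w : R) : w * Ifun w = w / 2 + / 4 * antider (antider Ifun) w.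
Proof.
  unfold Ifun; rewrite antider2_PS by apply entire_I.
  rewrite bessel_integral_equation by lra. field.
Qed.
Lemma J_integral_eq (w : R) : w * Jfun w = w / 2 - / 4 * antider (antider Jfun) w.
Proof.
  unfold Jfun; rewrite antider2_PS by apply entire_J.
  rewrite bessel_integral_equation by lra. field.
Qed.

Lemma antider2_conv (f g dg : R -> R) (z : R) : cont1 f -> C1 g dg ->
  conv (antider (antider f)) g z = antider (antider (conv f g)) z.
Proof.
  intros Hf Hg. rewrite (antider_conv _ _ _ z (antider_cont1 _ Hf) Hg).
  apply antider_ext; intros; apply (antider_conv _ _ _ _ Hf Hg).
Qed.

Ltac conv_cont1_tac := repeat first [assumption | apply conv_integrand_cont1 | apply cont1_mult
  | apply cont1_const | apply cont1_id | apply cont1_minus | apply cont1_plus].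

(* Multiplying by z and
   using z·(f * g) = (id·f) * g + f * (id·g), the integral equations of I and J
   turn both sides into the same combination of ∫∫I, ∫∫J and ∫∫(J * I). *)
Lemma conv_J_I (z : R) : conv Jfun Ifun z = 2 * (Ifun z - Jfun z).
Proof.
  set (AI := antider (antider Ifun)). set (AJ := antider (antider Jfun)).
  assert (gI := I_cont1). assert (gJ := J_cont1).
  assert (gAI : cont1 AI) by (apply antider_cont1, antider_cont1, gI).
  assert (gAJ : cont1 AJ) by (apply antider_cont1, antider_cont1, gJ).
  assert (S1 : z * conv Jfun Ifun z =
      conv (fun w => w * Jfun w) Ifun z + conv Jfun (fun w => w * Ifun w) z).
  { unfold conv. rewrite <- RIntR_scal, <- RIntR_plus.
    apply RIntR_ext; intros; ring.
    all: apply ex_RInt_cont1; first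
      [ solve [apply (conv_integrand_cont1 (fun w => w * Jfun w)); cont1_tac]
      | solve [apply (conv_integrand_cont1 Jfun (fun w => w * Ifun w)); cont1_tac]
      | conv_cont1_tac ]. }
  assert (S2 : conv (fun w => w * Jfun w) Ifun z = / 2 * conv (fun w => w) Ifun z - / 4 * conv AJ Ifun z).
  { unfold conv. rewrite <- !RIntR_scal, <- RIntR_minus.
    apply RIntR_ext; intros. rewrite J_integral_eq. fold AJ. field.
    all: apply ex_RInt_cont1; conv_cont1_tac. }
  assert (S3 : conv Jfun (fun w => w * Ifun w) z = / 2 * conv Jfun (fun w => w) z + / 4 * conv Jfun AI z).
  { unfold conv. rewrite <- !RIntR_scal, <- RIntR_plus.
    apply RIntR_ext; intros. rewrite I_integral_eq. fold AI. field.
    all: apply ex_RInt_cont1; conv_cont1_tac. }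
  assert (S4 : conv Jfun (fun w => w) z = AJ z).
  { rewrite conv_comm; auto. apply (conv_id _ _ z J_C1). apply cont1_id. }
  assert (S5 : conv Jfun AI z = antider (antider (conv Jfun Ifun)) z).
  { rewrite conv_comm, (antider2_conv _ _ _ _ gI J_C1) by auto.
    do 2 (apply antider_ext; intros). apply conv_comm; auto. }
  destruct (Req_dec z 0) as [Hz|Hz].
  - subst z. unfold conv; rewrite RIntR_point. unfold Ifun, Jfun; rewrite !PSeries_0.
    unfold bessel_coef; simpl; ring.
  - apply (Rmult_eq_reg_l z); auto.
    rewrite S1, S2, S3, S4, S5, (conv_id _ _ z I_C1), (antider2_conv _ _ _ _ gJ I_C1).
    replace (z * (2 * (Ifun z - Jfun z))) with (2 * (z * Ifun z) - 2 * (z * Jfun z)) by ring.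
    rewrite I_integral_eq, J_integral_eq. fold AI AJ. field.
Qed.

(** * 3. Kernel identity and inverse transform *)

Lemma volterra_der (Kf dKf : R -> R -> R) (Uc : R -> R) (x : R) :
  (forall u v, is_derive (fun z => Kf z v) u (dKf u v)) -> cont2 dKf -> cont2 Kf -> cont1 Uc ->
  is_derive (fun x => RInt (fun s => Kf x s * Uc s) 0 x) x
    (RInt (fun s => dKf x s * Uc s) 0 x + Kf x x * Uc x).
Proof.
  intros Hd Hc HK HU.
  apply (der_eq _ _ (RInt (fun s => dKf x s * Uc s) 0 x - Kf x 0 * Uc 0 * 0 + Kf x x * Uc x * 1)).
  2: ring.
  apply (der_RInt_param_bounds (fun z s => Kf z s * Uc s) (fun z s => dKf z s * Uc s) (fun _ => 0) (fun z => z) (fun _ => 0) (fun _ => 1) x).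
  - intros u v. apply (der_eq _ _ (dKf u v * Uc v + Kf u v * 0)). 2: ring.
    apply (der_mult (fun z => Kf z v) (fun _ => Uc v)). apply Hd. apply der_const.
  - apply cont2_mult; auto. apply cont2_2; auto.
  - intros u. apply cont1_mult; auto. apply cont2_sect; auto.
  - apply der_const.
  - apply der_id.
Qed.

Lemma volterra_cont1 (Kf dKf : R -> R -> R) (Uc : R -> R) :
  (forall u v, is_derive (fun z => Kf z v) u (dKf u v)) -> cont2 dKf -> cont2 Kf -> cont1 Uc ->
  cont1 (fun x => RInt (fun s => Kf x s * Uc s) 0 x).
Proof.
  intros. eapply cont1_of_derive. intros; apply volterra_der; eauto.
Qed.

Lemma inner_integral_cont1 (Lx : R -> R) (Kf dKy : R -> R -> R) (z : R) :
  cont1 Lx -> cont2 Kf ->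
  (forall u v, is_derive (fun w => Kf u w) v (dKy u v)) -> cont2 dKy ->
  cont1 (fun s => RInt (fun y => Lx y * Kf y s) s z).
Proof.
  intros HL HK Hd Hc. eapply cont1_of_derive. intros s.
  apply (der_RInt_param_bounds (fun s y => Lx y * Kf y s) (fun s y => Lx y * dKy y s) (fun s => s) (fun _ => z)
           (fun _ => 1) (fun _ => 0) s).
  - intros u v. apply der_scal, Hd.
  - apply cont2_swap. apply cont2_mult. apply cont2_1; auto. auto.
  - intros u. apply cont1_mult; auto. apply cont2_sect1; auto.
  - apply der_id.
  - apply der_const.
Qed.

(* Exchange of the order of integration over the triangle 0 ≤ s ≤ y ≤ x
   (both sides have the same derivative in x and vanish at 0). *)
Lemma fubini_triangle (Lx : R -> R) (Kf dKx dKy : R -> R -> R) (Uc : R -> R) (x : R) :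
  cont1 Lx -> cont1 Uc -> cont2 Kf ->
  (forall u v, is_derive (fun z => Kf z v) u (dKx u v)) -> cont2 dKx ->
  (forall u v, is_derive (fun z => Kf u z) v (dKy u v)) -> cont2 dKy ->
  RInt (fun y => Lx y * RInt (fun s => Kf y s * Uc s) 0 y) 0 x =
  RInt (fun s => Uc s * RInt (fun y => Lx y * Kf y s) s x) 0 x.
Proof.
  intros HL HU HK Hd1 Hc1 Hd2 Hc2.
  set (G := fun y => RInt (fun s => Kf y s * Uc s) 0 y).
  assert (HG : cont1 G) by (unfold G; apply (volterra_cont1 Kf dKx Uc); assumption).
  assert (Hh : forall z, cont1 (fun s => RInt (fun y => Lx y * Kf y s) s z))
    by (intros; apply (inner_integral_cont1 _ _ dKy); auto).
  assert (H0 : forall z, is_derive (fun z => RInt (fun y => Lx y * G y) 0 z -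
      RInt (fun s => Uc s * RInt (fun y => Lx y * Kf y s) s z) 0 z) z 0).
  { intros z.
    apply (der_eq _ _ (Lx z * G z - (RInt (fun s => Uc s * (Lx z * Kf z s)) 0 z
        - Uc 0 * RInt (fun y => Lx y * Kf y 0) 0 z * 0 + Uc z * RInt (fun y => Lx y * Kf y z) z z * 1))).
    - apply (der_minus (fun z => RInt (fun y => Lx y * G y) 0 z)
        (fun z => RInt (fun s => Uc s * RInt (fun y => Lx y * Kf y s) s z) 0 z)).
      apply (der_RInt (fun y => Lx y * G y)). apply cont1_mult; assumption.
      apply (der_RInt_param_bounds (fun z s => Uc s * RInt (fun y => Lx y * Kf y s) s z)
                     (fun z s => Uc s * (Lx z * Kf z s)) (fun _ => 0) (fun z => z) (fun _ => 0) (fun _ => 1) z).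
      + intros u v. apply (der_scal (fun z => RInt (fun y => Lx y * Kf y v) v z)).
        apply (der_RInt (fun y => Lx y * Kf y v)). apply cont1_mult; auto. apply cont2_sect1; auto.
      + apply cont2_mult. apply cont2_2; auto. apply cont2_mult. apply cont2_1; auto. auto.
      + intros u. apply cont1_mult; auto.
      + apply der_const.
      + apply der_id.
    - rewrite RIntR_point. unfold G.
      rewrite <- RIntR_scal.
      2: { apply ex_RInt_cont1, cont1_mult; auto. apply cont2_sect; auto. }
      assert (E : RInt (fun s => Uc s * (Lx z * Kf z s)) 0 z = RInt (fun x0 => Lx z * (Kf z x0 * Uc x0)) 0 z)
        by (apply RIntR_ext; intros; ring).
      rewrite E. ring. }
  pose proof (const_of_zero_derive _ x H0) as E. cbv beta in E. rewrite !RIntR_point in E. unfold G in *. lra.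
Qed.

(* Kernels of the form −(λ/ε) x φ(λ(x² − y²)/ε): K for φ = I and L for φ = J;
   kern_dx and kern_dy are their partial derivatives when φ' = dφ. *)
Definition barg (eps lam : R) (u v : R) : R := lam * (u ^ 2 - v ^ 2) / eps.
Definition kern (eps lam : R) (phi : R -> R) (x y : R) : R := - lam / eps * x * phi (barg eps lam x y).
Definition kern_dx (eps lam : R) (phi dphi : R -> R) (u v : R) : R :=
  - lam / eps * phi (barg eps lam u v) + - lam / eps * u * (lam * (2 * u) / eps * dphi (barg eps lam u v)).
Definition kern_dy (eps lam : R) (phi dphi : R -> R) (u v : R) : R :=
  - lam / eps * u * (lam * (- (2 * v)) / eps * dphi (barg eps lam u v)).

Lemma Kker_eq (eps lam x y : R) : Kker eps lam x y = kern eps lam Ifun x y.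
Proof. unfold Kker, kern, barg, Ifun. rewrite I1q_PS. reflexivity. Qed.
Lemma Lker_eq (eps lam x y : R) : Lker eps lam x y = kern eps lam Jfun x y.
Proof. unfold Lker, kern, barg, Jfun. rewrite J1q_PS. reflexivity. Qed.

Lemma barg_dx (eps lam u v : R) : eps <> 0 -> is_derive (fun z => barg eps lam z v) u (lam * (2 * u) / eps).
Proof.
  intros He. unfold barg.
  apply (der_eq _ _ (/ eps * (lam * (INR 2 * u ^ 1 * 1 - 0)))).
  2: { simpl. field. auto. }
  apply (der_ext (fun z => / eps * (lam * (z ^ 2 - v ^ 2)))). intros; unfold Rdiv; ring.
  apply der_scal, der_scal, der_minus. apply (der_pow (fun z => z)), der_id. apply der_const.
Qed.

Lemma barg_dy (eps lam u v : R) : eps <> 0 -> is_derive (fun z => barg eps lam u z) v (lam * (- (2 * v)) / eps).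
Proof.
  intros He. unfold barg.
  apply (der_eq _ _ (/ eps * (lam * (0 - INR 2 * v ^ 1 * 1)))).
  2: { simpl. field. auto. }
  apply (der_ext (fun z => / eps * (lam * (u ^ 2 - z ^ 2)))). intros; unfold Rdiv; ring.
  apply der_scal, der_scal, der_minus. apply der_const. apply (der_pow (fun z => z)), der_id.
Qed.

Lemma kern_der_x (eps lam : R) (phi dphi : R -> R) (u v : R) : eps <> 0 -> C1 phi dphi ->
  is_derive (fun z => kern eps lam phi z v) u (kern_dx eps lam phi dphi u v).
Proof.
  intros He [Hd _]. unfold kern, kern_dx.
  apply (der_eq _ _ ((- lam / eps * 1) * phi (barg eps lam u v) + (- lam / eps * u) *
     (lam * (2 * u) / eps * dphi (barg eps lam u v)))).
  2: ring.
  apply (der_mult (fun z => - lam / eps * z) (fun z => phi (barg eps lam z v))).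
  apply der_scal, der_id.
  apply (der_comp phi (fun z => barg eps lam z v)). apply Hd. apply barg_dx; auto.
Qed.

Lemma kern_der_y (eps lam : R) (phi dphi : R -> R) (u v : R) : eps <> 0 -> C1 phi dphi ->
  is_derive (fun z => kern eps lam phi u z) v (kern_dy eps lam phi dphi u v).
Proof.
  intros He [Hd _]. unfold kern, kern_dy.
  apply der_scal.
  apply (der_comp phi (fun z => barg eps lam u z)). apply Hd. apply barg_dy; auto.
Qed.

Lemma barg_cont2 (eps lam : R) : cont2 (barg eps lam).
Proof. unfold barg, Rdiv. cont2_tac. Qed.

Lemma cont2_comp_barg (eps lam : R) (phi : R -> R) : cont1 phi -> cont2 (fun u v => phi (barg eps lam u v)).
Proof. intros H. apply (cont2_comp (barg eps lam) phi); auto. apply barg_cont2. Qed.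

Lemma kern_cont2 (eps lam : R) (phi : R -> R) : cont1 phi -> cont2 (kern eps lam phi).
Proof. intros H. unfold kern. apply cont2_mult. cont2_tac. apply cont2_comp_barg; auto. Qed.

Lemma kern_dx_cont2 (eps lam : R) (phi dphi : R -> R) : cont1 phi -> cont1 dphi -> cont2 (kern_dx eps lam phi dphi).
Proof. intros H1 H2. unfold kern_dx. apply cont2_plus.
  apply cont2_mult. cont2_tac. apply cont2_comp_barg; auto.
  apply cont2_mult. cont2_tac. apply cont2_mult. unfold Rdiv; cont2_tac. apply cont2_comp_barg; auto. Qed.

Lemma kern_dy_cont2 (eps lam : R) (phi dphi : R -> R) : cont1 dphi -> cont2 (kern_dy eps lam phi dphi).
Proof. intros H2. unfold kern_dy.
  apply cont2_mult. cont2_tac. apply cont2_mult. unfold Rdiv; cont2_tac. apply cont2_comp_barg; auto. Qed.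

(* Kernel identity L(x,s) − K(x,s) = ∫ₛˣ L(x,y) K(y,s) dy: after the substitution
   z = λ(y² − s²)/ε the right-hand side is a multiple of (J * I)(λ(x² − s²)/ε). *)
Lemma kernel_identity (eps lam x s : R) : eps <> 0 ->
  kern eps lam Jfun x s - kern eps lam Ifun x s =
  RInt (fun y => kern eps lam Jfun x y * kern eps lam Ifun y s) s x.
Proof.
  intros He.
  set (Z := fun y => barg eps lam y s).
  set (F := fun w => Jfun (Z x - w) * Ifun w).
  assert (HF : cont1 F) by (apply conv_integrand_cont1; [apply J_cont1 | apply I_cont1]).
  assert (HZs : Z s = 0) by (unfold Z, barg; field; auto).
  assert (Hc : RInt (fun y => lam * (2 * y) / eps * F (Z y)) s x = 2 * (Ifun (Z x) - Jfun (Z x))).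
  { rewrite <- conv_J_I. unfold conv. fold F. rewrite <- HZs.
    apply (RInt_comp F Z (fun y => lam * (2 * y) / eps) s x).
    - intros; apply cont1_continuous, HF.
    - intros y _. split. apply barg_dx; auto. apply cont1_continuous. unfold Rdiv. cont1_tac. }
  rewrite <- (RIntR_ext (fun y => (lam / eps * x / 2) * (lam * (2 * y) / eps * F (Z y)))).
  2: { intros y _. unfold F, Z, kern.
       replace (barg eps lam x y) with (barg eps lam x s - barg eps lam y s) by (unfold barg; field; auto).
       field. auto. }
  rewrite RIntR_scal, Hc.
  unfold kern. unfold Z. field. auto.
  apply ex_RInt_cont1. apply cont1_mult. unfold Rdiv; cont1_tac.
  apply (cont1_comp Z F); auto. unfold Z, barg, Rdiv. cont1_tac.
Qed.

Section Kernels.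
Variables eps lam : R.
Hypothesis He : eps <> 0.

Lemma K_cont2 : cont2 (kern eps lam Ifun). Proof. apply kern_cont2, I_cont1. Qed.
Lemma L_cont2 : cont2 (kern eps lam Jfun). Proof. apply kern_cont2, J_cont1. Qed.
Lemma K_der_x (u v : R) : is_derive (fun z => kern eps lam Ifun z v) u (kern_dx eps lam Ifun dI u v).
Proof. apply kern_der_x; auto. apply I_C1. Qed.
Lemma L_der_x (u v : R) : is_derive (fun z => kern eps lam Jfun z v) u (kern_dx eps lam Jfun dJ u v).
Proof. apply kern_der_x; auto. apply J_C1. Qed.
Lemma K_der_y (u v : R) : is_derive (fun z => kern eps lam Ifun u z) v (kern_dy eps lam Ifun dI u v).
Proof. apply kern_der_y; auto. apply I_C1. Qed.
Lemma K_dx_cont2 : cont2 (kern_dx eps lam Ifun dI). Proof. apply kern_dx_cont2. apply I_cont1. apply I_C1. Qed.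
Lemma L_dx_cont2 : cont2 (kern_dx eps lam Jfun dJ). Proof. apply kern_dx_cont2. apply J_cont1. apply J_C1. Qed.
Lemma K_dy_cont2 : cont2 (kern_dy eps lam Ifun dI). Proof. apply kern_dy_cont2. apply I_C1. Qed.

(* Inverse of the backstepping transformation: with W = U − ∫₀ˣ K U,
   U = W + ∫₀ˣ L W (Fubini on the triangle, then the kernel identity). *)
Lemma inverse_transform (Uc : R -> R) (x : R) : cont1 Uc ->
  Uc x = (Uc x - RInt (fun s => kern eps lam Ifun x s * Uc s) 0 x)
    + RInt (fun y => kern eps lam Jfun x y * (Uc y - RInt (fun s => kern eps lam Ifun y s * Uc s) 0 y)) 0 x.
Proof.
  intros HU.
  set (K := kern eps lam Ifun). set (L := kern eps lam Jfun).
  assert (HG : cont1 (fun y => RInt (fun s => K y s * Uc s) 0 y))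
    by (apply (volterra_cont1 K (kern_dx eps lam Ifun dI)); auto; [apply K_der_x | apply K_dx_cont2 | apply K_cont2]).
  assert (HLx : cont1 (L x)) by (apply cont2_sect, L_cont2).
  rewrite (RIntR_ext (fun y => L x y * (Uc y - RInt (fun s => K y s * Uc s) 0 y)) (fun y => L x y * Uc y - L x y * RInt (fun s => K y s * Uc s) 0 y)).
  2: intros; ring.
  rewrite RIntR_minus.
  2: apply ex_RInt_cont1, cont1_mult; auto.
  2: apply ex_RInt_cont1, cont1_mult; auto.
  rewrite (fubini_triangle (L x) K (kern_dx eps lam Ifun dI) (kern_dy eps lam Ifun dI) Uc x); auto.
  2: apply K_cont2. 2: apply K_der_x. 2: apply K_dx_cont2. 2: apply K_der_y. 2: apply K_dy_cont2.
  rewrite (RIntR_ext (fun s => Uc s * RInt (fun y => L x y * K y s) s x) (fun s => L x s * Uc s - K x s * Uc s)).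
  2: { intros s _. unfold L, K. rewrite <- kernel_identity; auto. ring. }
  rewrite RIntR_minus.
  ring.
  apply ex_RInt_cont1, cont1_mult; auto.
  apply ex_RInt_cont1, cont1_mult; auto. apply cont2_sect, K_cont2.
Qed.

End Kernels.

(** * 4. Regularity of the gain k *)

(* k(y) = r K(1,y) + K_x(1,y) is κ(λ(1 − y²)/ε) for an explicit combination κ of I
   and I'; hence k is C² with k'(0) = 0, and k', k'' have closed forms k1, k2. *)

Definition ddI : R -> R := PSeries (PS_derive (PS_derive (bessel_coef 1))).
Definition dddI : R -> R := PSeries (PS_derive (PS_derive (PS_derive (bessel_coef 1)))).

Lemma dI_C1 : C1 dI ddI.
Proof. split. intros; apply PS_der, entire_derive, entire_I.
  apply PS_cont1, entire_derive, entire_derive, entire_I. Qed.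
Lemma ddI_C1 : C1 ddI dddI.
Proof. split. intros; apply PS_der, entire_derive, entire_derive, entire_I.
  apply PS_cont1, entire_derive, entire_derive, entire_derive, entire_I. Qed.

Lemma C1_lin_comb (a b : R) (f df ddf : R -> R) : C1 f df -> C1 df ddf ->
  C1 (fun z => a * f z + b * df z) (fun z => a * df z + b * ddf z).
Proof.
  intros [Hf _] Hdf. assert (Hdfc := C1_cont1 _ _ Hdf). destruct Hdf as [Hdf Hddf]. split.
  - intros x. apply der_plus; apply der_scal; auto.
  - cont1_tac.
Qed.

Section Gain.
Variables eps lam q : R.
Hypothesis He : eps <> 0.

Definition cA : R := rr eps lam q * (- lam / eps * 1) + - lam / eps.
Definition cB : R := - lam / eps * 1 * (lam * (2 * 1) / eps).
Definition Q1 (y : R) : R := barg eps lam 1 y.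
Definition qd (y : R) : R := lam * (- (2 * y)) / eps.
Definition kap (z : R) : R := cA * Ifun z + cB * dI z.
Definition kap1 (z : R) : R := cA * dI z + cB * ddI z.
Definition kap2 (z : R) : R := cA * ddI z + cB * dddI z.

Lemma kap_C1 : C1 kap kap1.
Proof. apply C1_lin_comb; [apply I_C1 | apply dI_C1]. Qed.
Lemma kap1_C1 : C1 kap1 kap2.
Proof. apply C1_lin_comb; [apply dI_C1 | apply ddI_C1]. Qed.

Lemma kfun_eq (y : R) : kfun eps lam q y = kap (Q1 y).
Proof.
  assert (HD : Derive (fun x => Kker eps lam x y) 1 = kern_dx eps lam Ifun dI 1 y).
  { apply is_derive_unique. apply (der_ext (fun x => kern eps lam Ifun x y)).
    intros; rewrite Kker_eq; auto. apply K_der_x; auto. }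
  unfold kfun. rewrite HD, Kker_eq.
  unfold kap, cA, cB, kern, kern_dx, Q1. ring.
Qed.

Definition k1 (y : R) : R := kap1 (Q1 y) * qd y.
Definition k2 (y : R) : R := kap2 (Q1 y) * qd y * qd y + kap1 (Q1 y) * (lam * (-2) / eps).

Lemma qd_der (y : R) : is_derive qd y (lam * (-2) / eps).
Proof.
  apply (der_ext (fun z => lam * (-2) / eps * z)). { intros z; unfold qd; field; auto. }
  apply (der_eq _ _ (lam * (-2) / eps * 1)); [apply der_scal, der_id | ring].
Qed.

Lemma kfun_der (y : R) : is_derive (kfun eps lam q) y (k1 y).
Proof.
  apply (der_ext (fun y => kap (Q1 y))). intros; rewrite kfun_eq; auto.
  unfold k1. rewrite Rmult_comm.
  apply (der_comp kap Q1). apply kap_C1. unfold Q1, qd. apply barg_dy; auto.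
Qed.

Lemma k1_der (y : R) : is_derive k1 y (k2 y).
Proof.
  unfold k1, k2.
  apply (der_eq _ _ ((qd y * kap2 (Q1 y)) * qd y + kap1 (Q1 y) * (lam * (-2) / eps))). 2: ring.
  apply (der_mult (fun y => kap1 (Q1 y)) qd).
  apply (der_comp kap1 Q1). apply kap1_C1. unfold Q1, qd. apply barg_dy; auto.
  apply qd_der.
Qed.

Lemma Q1_cont1 : cont1 Q1.
Proof. intros y. apply (cont2_sect (barg eps lam) 1 (barg_cont2 eps lam)). Qed.
Lemma qd_cont1 : cont1 qd.
Proof. apply (cont1_of_derive qd (fun _ => lam * (-2) / eps)). apply qd_der. Qed.

Lemma kfun_cont1 : cont1 (kfun eps lam q).
Proof. apply (cont1_of_derive _ k1). apply kfun_der. Qed.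
Lemma k1_cont1 : cont1 k1.
Proof. apply (cont1_of_derive _ k2). apply k1_der. Qed.
Lemma k2_cont1 : cont1 k2.
Proof.
  assert (H2 : cont1 (fun y => kap2 (Q1 y))) by (apply cont1_comp; [apply Q1_cont1 | apply kap1_C1]).
  assert (H1 : cont1 (fun y => kap1 (Q1 y))) by (apply cont1_comp; [apply Q1_cont1 | apply (C1_cont1 _ _ kap1_C1)]).
  assert (Hq := qd_cont1). unfold k2. cont1_tac.
Qed.

Lemma Derive_k (y : R) : Derive (kfun eps lam q) y = k1 y.
Proof. apply is_derive_unique, kfun_der. Qed.
Lemma Derive_k_fun : Derive (kfun eps lam q) = k1.
Proof. apply functional_extensionality, Derive_k. Qed.
Lemma Derive2_k (y : R) : Derive (Derive (kfun eps lam q)) y = k2 y.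
Proof. rewrite Derive_k_fun. apply is_derive_unique, k1_der. Qed.
Lemma k1_0 : k1 0 = 0.
Proof. unfold k1, qd. replace (lam * - (2 * 0) / eps) with 0 by (field; auto). ring. Qed.

End Gain.

(** * 5. L² bounds for the inverse transform *)

(* ‖w + t‖² ≤ (1 + √M)² ‖w‖² when ⟨w,t⟩² ≤ ‖w‖²‖t‖² and ‖t‖² ≤ M ‖w‖². *)
Lemma sum_norm_bound (N S P M : R) : 0 <= N -> 0 <= M -> S ^ 2 <= N * P -> P <= M * N ->
  N + 2 * S + P <= (1 + sqrt M) ^ 2 * N.
Proof.
  intros HN HM HS HP.
  assert (Hs := sqrt_pos M). assert (Hss := sqrt_sqrt M HM).
  set (s := sqrt M) in *.
  assert (HS2 : S <= s * N).
  { assert (S ^ 2 <= (s * N) ^ 2).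
    { replace ((s * N) ^ 2) with (s * s * N * N) by ring. rewrite Hss. nra. }
    assert (0 <= s * N) by nra. nra. }
  rewrite <- Hss in HP. nra.
Qed.

Section InverseBounds.
Variables eps lam : R.
Hypothesis He : eps <> 0.
Variable Uc : R -> R.
Hypothesis HU : cont1 Uc.

Definition Wc (x : R) : R := Uc x - RInt (fun s => kern eps lam Ifun x s * Uc s) 0 x.
Definition Tc (x : R) : R := RInt (fun y => kern eps lam Jfun x y * Wc y) 0 x.

Lemma Wc_cont1 : cont1 Wc.
Proof.
  unfold Wc. apply cont1_minus; auto.
  apply (volterra_cont1 _ (kern_dx eps lam Ifun dI)); auto.
  apply K_der_x; auto. apply K_dx_cont2. apply K_cont2.
Qed.

Lemma Tc_cont1 : cont1 Tc.
Proof.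
  unfold Tc. apply (volterra_cont1 _ (kern_dx eps lam Jfun dJ)); auto.
  apply L_der_x; auto. apply L_dx_cont2. apply L_cont2. apply Wc_cont1.
Qed.

Lemma Uc_inv (x : R) : Uc x = Wc x + Tc x.
Proof. unfold Tc, Wc. apply inverse_transform; auto. Qed.

(* x ↦ ∫₀ˣ L(x,y)² dy is continuous (a Volterra operator applied to 1). *)
Lemma L_sq_volterra_cont1 : cont1 (fun x => RInt (fun y => kern eps lam Jfun x y ^ 2) 0 x).
Proof.
  apply (cont1_ext (fun x => RInt (fun y => kern eps lam Jfun x y ^ 2 * 1) 0 x)).
  { intros; apply RIntR_ext; intros; ring. }
  apply (volterra_cont1 _ (fun u v => INR 2 * kern eps lam Jfun u v ^ 1 * kern_dx eps lam Jfun dJ u v)).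
  - intros u v. apply (der_pow (fun z => kern eps lam Jfun z v)). apply L_der_x; auto.
  - apply cont2_mult. apply cont2_mult. apply cont2_const.
    apply cont2_pow, L_cont2. apply L_dx_cont2.
  - apply cont2_pow, L_cont2.
  - apply cont1_const.
Qed.

Definition Mconst : R := RInt (fun x => RInt (fun y => (Lker eps lam x y) ^ 2) 0 x) 0 1.

Lemma Lker_fun : Lker eps lam = kern eps lam Jfun.
Proof. apply functional_extensionality; intros x; apply functional_extensionality; intros y; apply Lker_eq. Qed.

Lemma Mconst_ge0 : 0 <= Mconst.
Proof.
  unfold Mconst. rewrite Lker_fun. apply RInt_ge_0. lra. apply ex_RInt_cont1, L_sq_volterra_cont1.
  intros x Hx. apply RInt_sq_ge0. lra. apply cont2_sect, L_cont2.
Qed.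

(* ‖T‖² ≤ M ‖W‖², by Cauchy–Schwarz in y for each x. *)
Lemma Tc_L2_bound : RInt (fun x => Tc x ^ 2) 0 1 <= Mconst * RInt (fun x => Wc x ^ 2) 0 1.
Proof.
  assert (HW := Wc_cont1).
  unfold Mconst. rewrite Lker_fun, <- RIntR_scal_r by apply ex_RInt_cont1, L_sq_volterra_cont1.
  apply RInt_le. lra. apply ex_RInt_cont1, cont1_pow, Tc_cont1.
  { apply ex_RInt_cont1, cont1_mult. apply L_sq_volterra_cont1. apply cont1_const. }
  intros x Hx. unfold Tc.
  apply Rle_trans with (RInt (fun y => kern eps lam Jfun x y ^ 2) 0 x * RInt (fun y => Wc y ^ 2) 0 x).
  { apply RInt_cauchy_schwarz; auto. lra. apply cont2_sect, L_cont2. }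
  apply Rmult_le_compat_l. { apply RInt_sq_ge0. lra. apply cont2_sect, L_cont2. }
  rewrite <- (RIntR_Chasles _ 0 x 1) by (apply ex_RInt_cont1, cont1_pow; auto).
  assert (0 <= RInt (fun y => Wc y ^ 2) x 1) by (apply RInt_sq_ge0; auto; lra). lra.
Qed.

Lemma Uc_L2_bound : RInt (fun x => Uc x ^ 2) 0 1 <= (1 + sqrt Mconst) ^ 2 * RInt (fun x => Wc x ^ 2) 0 1.
Proof.
  assert (HW := Wc_cont1). assert (HT := Tc_cont1).
  rewrite (RIntR_ext _ (fun x => Wc x ^ 2 + 2 * (Wc x * Tc x) + Tc x ^ 2))
    by (intros; rewrite Uc_inv; ring).
  rewrite !RIntR_plus, RIntR_scal by (apply ex_RInt_cont1; cont1_tac).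
  apply sum_norm_bound.
  - apply RInt_sq_ge0; auto; lra.
  - apply Mconst_ge0.
  - apply RInt_cauchy_schwarz; auto; lra.
  - apply Tc_L2_bound.
Qed.

Lemma Tc1_bound : (Tc 1) ^ 2 <= RInt (fun y => (Lker eps lam 1 y) ^ 2) 0 1 * RInt (fun x => Wc x ^ 2) 0 1.
Proof.
  unfold Tc. rewrite Lker_fun. apply RInt_cauchy_schwarz. lra. apply cont2_sect, L_cont2. apply Wc_cont1.
Qed.

End InverseBounds.

(** * 6. The closed loop *)

(* The states are only known to be continuous on [0,1] × (t_j, t_{j+1}); composing
   with the clamp y ↦ max 0 (min 1 y) gives globally continuous functions of y that
   agree with them on [0,1]. *)
Definition clamp01 (y : R) : R := Rmax 0 (Rmin 1 y).
Definition clamp_at (f : R -> R -> R) (t y : R) : R := f (clamp01 y) t.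

Lemma clamp01_range (y : R) : 0 <= clamp01 y <= 1.
Proof. unfold clamp01, Rmax, Rmin. repeat destruct Rle_dec; lra. Qed.
Lemma clamp01_id (y : R) : 0 <= y <= 1 -> clamp01 y = y.
Proof. intros H; unfold clamp01, Rmax, Rmin. repeat destruct Rle_dec; lra. Qed.
Lemma clamp01_lip (y z : R) : Rabs (clamp01 y - clamp01 z) <= Rabs (y - z).
Proof.
  unfold clamp01, Rmax, Rmin. repeat destruct Rle_dec;
  unfold Rabs; repeat destruct Rcase_abs; lra.
Qed.

Lemma clamp_at_cont1 (f : R -> R -> R) (a b t : R) : cont_rect f a b -> a < t < b -> cont1 (clamp_at f t).
Proof.
  intros H Ht y e He.
  destruct (H (clamp01 y) t (clamp01_range y) Ht e He) as [d [Hd Hd']].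
  exists d; split; auto. intros z [_ Hz]. simpl in *. unfold R_dist in *.
  apply Hd'; auto. apply clamp01_range. pose proof (clamp01_lip z y); lra.
  rewrite Rminus_eq_0, Rabs_R0; auto.
Qed.

Lemma clamp_at_cont2 (f : R -> R -> R) (a b t y : R) : cont_rect f a b -> a < t < b ->
  continuity_2d_pt (fun u v => clamp_at f u v) t y.
Proof.
  intros H Ht e.
  destruct (H (clamp01 y) t (clamp01_range y) Ht e (cond_pos e)) as [d [Hd Hd']].
  assert (Hp : 0 < Rmin d (Rmin (t - a) (b - t))) by (repeat apply Rmin_pos; lra).
  exists (mkposreal _ Hp). intros u v Hu Hv. simpl in *.
  assert (Hm1 := Rmin_l d (Rmin (t - a) (b - t))).
  assert (Hm2 := Rmin_r d (Rmin (t - a) (b - t))).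
  assert (Hm3 := Rmin_l (t - a) (b - t)). assert (Hm4 := Rmin_r (t - a) (b - t)).
  apply Hd'. apply clamp01_range.
  split; apply Rabs_lt_between' in Hu; lra.
  pose proof (clamp01_lip v y); lra. lra.
Qed.

Lemma RInt01_clamp (g : R -> R) (f : R -> R -> R) (s : R) :
  RInt (fun y => g y * f y s) 0 1 = RInt (fun y => g y * clamp_at f s y) 0 1.
Proof.
  apply RIntR_ext. intros y Hy. rewrite Rmin_left, Rmax_right in Hy by lra.
  unfold clamp_at. rewrite clamp01_id by lra. reflexivity.
Qed.

Lemma locally_interval (a b t : R) : a < t < b -> locally t (fun s => a < s < b).
Proof.
  intros H. assert (Hp : 0 < Rmin (t - a) (b - t)) by (apply Rmin_pos; lra).
  exists (mkposreal _ Hp). intros s Hs.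
  change (Rabs (s + - t) < Rmin (t - a) (b - t)) in Hs.
  assert (Hm1 := Rmin_l (t - a) (b - t)). assert (Hm2 := Rmin_r (t - a) (b - t)).
  apply Rabs_lt_between' in Hs. lra.
Qed.

Lemma RInt01_by_parts (f df g dg gc dgc : R -> R) :
  (forall x, is_derive f x (df x)) -> cont1 f -> cont1 df ->
  (forall x, 0 <= x <= 1 -> is_derive g x (dg x)) ->
  (forall x, 0 <= x <= 1 -> g x = gc x /\ dg x = dgc x) -> cont1 gc -> cont1 dgc ->
  RInt (fun x => f x * dgc x) 0 1 = f 1 * g 1 - f 0 * g 0 - RInt (fun x => df x * gc x) 0 1.
Proof.
  intros Hf Hfc Hdfc Hg Hgc Hc Hdc.
  enough (E : RInt (fun x => df x * gc x + f x * dgc x) 0 1 = f 1 * g 1 - f 0 * g 0).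
  { rewrite RIntR_plus in E by (apply ex_RInt_cont1; cont1_tac). lra. }
  apply (RInt_01_of_derive (fun x => f x * g x) (fun x => df x * g x + f x * dg x)).
  - intros x Hx. apply der_mult; auto.
  - intros x Hx. destruct (Hgc x Hx) as [-> ->]. reflexivity.
  - cont1_tac.
Qed.

(* (a₁ + … + a₅)² ≤ 6a₁² + 3a₂² + 6a₃² + 6a₄² + 6a₅² (Cauchy–Schwarz with weights
   1/6, 1/3, 1/6, 1/6, 1/6). *)
Lemma square_sum5_bound (x1 x2 x3 x4 x5 : R) :
  (x1 + x2 + x3 + x4 + x5) ^ 2 <= 6 * x1 ^ 2 + 3 * x2 ^ 2 + 6 * x3 ^ 2 + 6 * x4 ^ 2 + 6 * x5 ^ 2.
Proof.
  pose proof (Rle_0_sqr (2 * x2 - (x1 + x3 + x4 + x5))).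
  pose proof (Rle_0_sqr (x1 - x3)). pose proof (Rle_0_sqr (x1 - x4)). pose proof (Rle_0_sqr (x1 - x5)).
  pose proof (Rle_0_sqr (x3 - x4)). pose proof (Rle_0_sqr (x3 - x5)). pose proof (Rle_0_sqr (x4 - x5)).
  unfold Rsqr in *. nra.
Qed.

Lemma derivative_square_bound (D c d B beta W1 T1 gam u0 F S L1 N : R) :
  D = - c * d - B + beta * (W1 + T1) - gam * u0 ->
  0 <= F -> B ^ 2 <= F * (S * N) -> T1 ^ 2 <= L1 * N ->
  D ^ 2 <= 6 * c ^ 2 * d ^ 2 + (3 * S * F + 6 * beta ^ 2 * L1) * N + 6 * beta ^ 2 * W1 ^ 2 + 6 * gam ^ 2 * u0 ^ 2.
Proof.
  intros -> HF HB HT.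
  replace (- c * d - B + beta * (W1 + T1) - gam * u0)
    with (- c * d + - B + beta * W1 + beta * T1 + - gam * u0) by ring.
  eapply Rle_trans. apply square_sum5_bound.
  assert (beta ^ 2 * T1 ^ 2 <= beta ^ 2 * (L1 * N)) by (apply Rmult_le_compat_l; auto; apply pow2_ge_0).
  nra.
Qed.

Section HoldError.
Variables eps lam q : R.
Hypothesis He : eps <> 0.

Local Notation k := (kfun eps lam q).

Definition beta_k : R := eps * q * k 1 + eps * k1 eps lam q 1.
Definition gamma_k : R := lam * k 0 / 2 + RInt (fun y => k y * p1 eps lam q y) 0 1.
Definition weight_k (y : R) : R := eps * k2 eps lam q y + eps * k 1 * k y + lam * k y.

Lemma weight_k_cont1 : cont1 weight_k.
Proof.
  assert (Hk := kfun_cont1 eps lam q He). assert (Hk2 := k2_cont1 eps lam q He).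
  unfold weight_k. cont1_tac.
Qed.

Lemma alpha1_eq : alpha1 eps lam q =
  3 * (1 + sqrt (Mconst eps lam)) ^ 2 * RInt (fun y => weight_k y ^ 2) 0 1
  + 6 * beta_k ^ 2 * RInt (fun y => (Lker eps lam 1 y) ^ 2) 0 1.
Proof.
  unfold alpha1, Mconst, beta_k. cbv zeta. rewrite Derive_k by auto.
  do 2 f_equal. apply RIntR_ext. intros. unfold weight_k. rewrite Derive2_k by auto. reflexivity.
Qed.

Lemma alpha2_eq : alpha2 eps lam q = 6 * beta_k ^ 2.
Proof. unfold alpha2, beta_k. cbv zeta. rewrite Derive_k by auto. reflexivity. Qed.

Variables (uh : R -> R -> R) (tj : nat -> R) (j : nat).
Hypothesis Hreg : classical_on uh (tj j) (tj (S j)).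

Local Notation a := (tj j).
Local Notation b := (tj (S j)).

Definition gain_integral (s : R) : R := RInt (fun y => k y * uh y s) 0 1.

Lemma gain_integral_ex (s : R) : a < s < b -> ex_RInt (fun y => k y * uh y s) 0 1.
Proof.
  intros Hs. destruct Hreg as [_ [C0 _]].
  apply (ex_RIntR_ext (fun y => k y * clamp_at uh s y)).
  { intros y Hy. rewrite Rmin_left, Rmax_right in Hy by lra.
    unfold clamp_at. rewrite clamp01_id by lra. reflexivity. }
  apply ex_RInt_cont1, cont1_mult. apply kfun_cont1; auto. apply (clamp_at_cont1 uh a b s C0 Hs).
Qed.

Lemma gain_integral_der (t : R) : a < t < b ->
  is_derive gain_integral t (RInt (fun y => k y * clamp_at (Defs.Dt uh) t y) 0 1).
Proof.
  intros Ht. destruct Hreg as [Hex [C0 [_ [_ Ct]]]].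
  assert (Hk := kfun_cont1 eps lam q He).
  apply (der_ext (fun s => RInt (fun y => k y * clamp_at uh s y) 0 1)).
  { intros s; unfold gain_integral; symmetry; apply RInt01_clamp. }
  rewrite (RIntR_ext _ (fun y => Derive (fun s => k y * clamp_at uh s y) t)).
  2: { intros y _. rewrite Derive_scal. reflexivity. }
  apply (is_derive_RInt_param (fun s y => k y * clamp_at uh s y) 0 1 t).
  - apply (filter_imp (fun s => a < s < b)). 2: apply locally_interval; auto.
    intros s Hs y Hy. apply ex_derive_scal. apply (Hex (clamp01 y) s (clamp01_range y) Hs).
  - intros y Hy. apply (continuity_2d_pt_ext (fun u v => k v * clamp_at (Defs.Dt uh) u v)).
    { intros; rewrite Derive_scal; reflexivity. }
    apply continuity_2d_pt_mult. apply cont2_2; auto. apply (clamp_at_cont2 (Defs.Dt uh) a b t y Ct Ht).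
  - apply (filter_imp (fun s => a < s < b)). 2: apply locally_interval; auto.
    intros s Hs. apply ex_RInt_cont1, cont1_mult; auto. apply (clamp_at_cont1 uh a b s C0 Hs).
Qed.

Lemma dhold_eq (s : R) : a < s < b -> ex_RInt (fun y => k y * uh y a) 0 1 ->
  dhold eps lam q uh tj j s = Uin eps lam q uh tj j - gain_integral s.
Proof.
  intros Hs Hint. unfold dhold, Uin, gain_integral.
  rewrite <- RIntR_minus; auto. apply RIntR_ext; intros; ring. apply gain_integral_ex; auto.
Qed.

Lemma dhold_der_integrable (t : R) : a < t < b -> ex_RInt (fun y => k y * uh y a) 0 1 ->
  is_derive (dhold eps lam q uh tj j) t (- RInt (fun y => k y * clamp_at (Defs.Dt uh) t y) 0 1).
Proof.
  intros Ht Hint.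
  apply (is_derive_ext_loc (fun s => Uin eps lam q uh tj j - gain_integral s)).
  - apply (filter_imp (fun s => a < s < b)). 2: apply locally_interval; auto.
    intros s Hs; symmetry; apply dhold_eq; auto.
  - apply (der_eq _ _ (0 - RInt (fun y => k y * clamp_at (Defs.Dt uh) t y) 0 1)). 2: ring.
    apply der_minus. apply der_const. apply gain_integral_der; auto.
Qed.

(* Otherwise no integral in d(s) exists, d is locally constant and ḋ = 0. *)
Lemma dhold_der_not_integrable (t : R) : a < t < b -> ~ ex_RInt (fun y => k y * uh y a) 0 1 ->
  is_derive (dhold eps lam q uh tj j) t 0.
Proof.
  intros Ht Hnint.
  assert (Hni : forall s, a < s < b -> ~ ex_RInt (fun y => k y * (uh y a - uh y s)) 0 1).
  { intros s Hs H. apply Hnint.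
    apply (ex_RIntR_ext (fun y => k y * (uh y a - uh y s) + k y * uh y s)).
    { intros; ring. }
    apply ex_RIntR_plus; auto. apply gain_integral_ex; auto. }
  apply (is_derive_ext_loc (fun _ => dhold eps lam q uh tj j t)). 2: apply der_const.
  apply (filter_imp (fun s => a < s < b)). 2: apply locally_interval; auto.
  intros s Hs. unfold dhold. apply RInt_not_ex; apply Hni; auto.
Qed.

Section AtTime.
Variables t u0 U : R.
Hypothesis Ht : a < t < b.
Hypothesis Hpde : forall x, 0 <= x <= 1 ->
  Defs.Dt uh x t = eps * Defs.Dx (Defs.Dx uh) x t + lam * uh x t + p1 eps lam q x * u0.
Hypothesis Hbc0 : Defs.Dx uh 0 t = p10 eps lam * u0.
Hypothesis Hbc1 : Defs.Dx uh 1 t + q * uh 1 t = U.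

Local Notation Uc := (clamp_at uh t).
Local Notation U1c := (clamp_at (Defs.Dx uh) t).
Local Notation U2c := (clamp_at (Defs.Dx (Defs.Dx uh)) t).
Local Notation Utc := (clamp_at (Defs.Dt uh) t).

Lemma clamped_states_cont1 : cont1 Uc /\ cont1 U1c /\ cont1 U2c /\ cont1 Utc.
Proof.
  destruct Hreg as [_ [C0 [C1 [C2 Ct]]]].
  repeat split; eapply clamp_at_cont1; eauto.
Qed.

(* ∫ k ∂ₜû = ε ∫ k ∂ₓₓû + λ ∫ k û + u₀ ∫ k p₁.  The integrability of k p₁ is not
   assumed: when u₀ ≠ 0 it follows from the observer equation, and when u₀ = 0 the
   term vanishes. *)
Lemma source_identity :
  RInt (fun y => k y * Utc y) 0 1 =
  eps * RInt (fun y => k y * U2c y) 0 1 + lam * RInt (fun y => k y * Uc y) 0 1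
  + u0 * RInt (fun y => k y * p1 eps lam q y) 0 1.
Proof.
  destruct clamped_states_cont1 as [HU [_ [HU2 HUt]]].
  assert (Hk := kfun_cont1 eps lam q He).
  assert (Hpde' : forall y, Rmin 0 1 < y < Rmax 0 1 ->
    k y * Utc y = eps * (k y * U2c y) + lam * (k y * Uc y) + u0 * (k y * p1 eps lam q y)).
  { intros y Hy. rewrite Rmin_left, Rmax_right in Hy by lra.
    unfold clamp_at. rewrite clamp01_id, Hpde by lra. ring. }
  assert (I0 : ex_RInt (fun y => k y * Uc y) 0 1) by (apply ex_RInt_cont1; cont1_tac).
  assert (I2 : ex_RInt (fun y => k y * U2c y) 0 1) by (apply ex_RInt_cont1; cont1_tac).
  assert (Ip : ex_RInt (fun y => u0 * (k y * p1 eps lam q y)) 0 1).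
  { apply (ex_RIntR_ext (fun y => k y * Utc y - eps * (k y * U2c y) - lam * (k y * Uc y))).
    { intros y Hy. rewrite Hpde' by auto. ring. }
    apply ex_RInt_cont1; cont1_tac. }
  rewrite (RIntR_ext _ (fun y => eps * (k y * U2c y) + lam * (k y * Uc y)
    + u0 * (k y * p1 eps lam q y)) _ _ Hpde').
  rewrite RIntR_plus; [| apply ex_RInt_cont1; cont1_tac | exact Ip].
  rewrite RIntR_plus; [| apply ex_RIntR_scal, I2 | apply ex_RIntR_scal, I0].
  rewrite (RIntR_scal (fun y => k y * U2c y)), (RIntR_scal (fun y => k y * Uc y)) by assumption.
  destruct (Req_dec u0 0) as [Hu0|Hu0].
  - rewrite Hu0, (RIntR_ext (fun y => 0 * (k y * p1 eps lam q y)) (fun _ => 0)).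
    + rewrite RIntR_const, Rmult_0_l, Rmult_0_r. reflexivity.
    + intros; ring.
  - rewrite (RIntR_scal (fun y => k y * p1 eps lam q y)); auto.
    apply (ex_RIntR_ext (fun y => / u0 * (u0 * (k y * p1 eps lam q y)))).
    { intros; field; auto. }
    apply ex_RIntR_scal; auto.
Qed.

(* Two integrations by parts, using k'(0) = 0. *)
Lemma by_parts_Dxx :
  RInt (fun y => k y * U2c y) 0 1 =
  k 1 * Defs.Dx uh 1 t - k 0 * Defs.Dx uh 0 t - RInt (fun y => k1 eps lam q y * U1c y) 0 1.
Proof.
  destruct clamped_states_cont1 as [_ [HU1 [HU2 _]]]. destruct Hreg as [Hex _].
  apply (RInt01_by_parts k (k1 eps lam q) (fun z => Defs.Dx uh z t) (fun z => Defs.Dx (Defs.Dx uh) z t) U1c U2c); auto.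
  - apply kfun_der; auto.
  - apply kfun_cont1; auto.
  - apply k1_cont1; auto.
  - intros y Hy. apply Derive_correct, (Hex y t Hy Ht).
  - intros y Hy. unfold clamp_at. rewrite clamp01_id; auto.
Qed.

Lemma by_parts_Dx :
  RInt (fun y => k1 eps lam q y * U1c y) 0 1 =
  k1 eps lam q 1 * uh 1 t - RInt (fun y => k2 eps lam q y * Uc y) 0 1.
Proof.
  destruct clamped_states_cont1 as [HU [HU1 _]]. destruct Hreg as [Hex _].
  rewrite (RInt01_by_parts (k1 eps lam q) (k2 eps lam q) (fun z => uh z t) (fun z => Defs.Dx uh z t) Uc U1c); auto.
  - rewrite k1_0 by auto. lra.
  - apply k1_der; auto.
  - apply k1_cont1; auto.
  - apply k2_cont1; auto.
  - intros y Hy. apply Derive_correct, (Hex y t Hy Ht).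
  - intros y Hy. unfold clamp_at. rewrite clamp01_id; auto.
Qed.

Lemma Dt_gain_identity :
  RInt (fun y => k y * Utc y) 0 1 =
  eps * k 1 * (U - RInt (fun y => k y * Uc y) 0 1) + RInt (fun y => weight_k y * Uc y) 0 1
  - beta_k * uh 1 t + gamma_k * u0.
Proof.
  destruct clamped_states_cont1 as [HU _].
  assert (Hk := kfun_cont1 eps lam q He). assert (Hk2 := k2_cont1 eps lam q He).
  assert (Hw : RInt (fun y => weight_k y * Uc y) 0 1 = eps * RInt (fun y => k2 eps lam q y * Uc y) 0 1
      + eps * k 1 * RInt (fun y => k y * Uc y) 0 1 + lam * RInt (fun y => k y * Uc y) 0 1).
  { unfold weight_k.
    rewrite (RIntR_ext _ (fun y => (eps * (k2 eps lam q y * Uc y) + (eps * k 1) * (k y * Uc y))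
      + lam * (k y * Uc y))) by (intros; ring).
    rewrite !RIntR_plus, !RIntR_scal by (apply ex_RInt_cont1; cont1_tac). reflexivity. }
  rewrite source_identity, by_parts_Dxx, by_parts_Dx, Hw, Hbc0.
  replace (Defs.Dx uh 1 t) with (U - q * uh 1 t) by lra.
  unfold beta_k, gamma_k, p10.
  (* the equation is typed in Coquelicot's copy of R; restate it in R for field *)
  match goal with |- ?x = ?y => change (@eq R x y) end. field. auto.
Qed.

Lemma what_eq_Wc (x : R) : 0 <= x <= 1 -> what eps lam uh x t = Wc eps lam Uc x.
Proof.
  intros Hx. unfold what, Wc, clamp_at. rewrite (clamp01_id x Hx). f_equal.
  apply RIntR_ext. intros y Hy. rewrite Rmin_left, Rmax_right in Hy by lra.
  rewrite (clamp01_id y) by lra. rewrite Kker_eq. reflexivity.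
Qed.

Lemma hold_error_bound : U = Uin eps lam q uh tj j ->
  ex_derive (dhold eps lam q uh tj j) t /\
  (Derive (dhold eps lam q uh tj j) t) ^ 2 <=
    rho1 eps lam q * (dhold eps lam q uh tj j t) ^ 2
    + alpha1 eps lam q * RInt (fun x => (what eps lam uh x t) ^ 2) 0 1
    + alpha2 eps lam q * (what eps lam uh 1 t) ^ 2
    + alpha3 eps lam q * u0 ^ 2.
Proof.
  intros HUin. destruct clamped_states_cont1 as [HU _].
  assert (Hk := kfun_cont1 eps lam q He).
  rewrite (RIntR_ext _ (fun x => Wc eps lam Uc x ^ 2))
    by (intros x Hx; rewrite Rmin_left, Rmax_right in Hx by lra; rewrite what_eq_Wc by lra; reflexivity).
  rewrite what_eq_Wc, alpha1_eq, alpha2_eq by lra.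
  set (N := RInt (fun x => Wc eps lam Uc x ^ 2) 0 1).
  set (F := RInt (fun y => weight_k y ^ 2) 0 1).
  set (L1 := RInt (fun y => Lker eps lam 1 y ^ 2) 0 1).
  set (S := (1 + sqrt (Mconst eps lam)) ^ 2).
  assert (HN : 0 <= N) by (apply RInt_sq_ge0; [lra | apply Wc_cont1; auto]).
  assert (HF : 0 <= F) by (apply RInt_sq_ge0; [lra | apply weight_k_cont1]).
  assert (HL1 : 0 <= L1).
  { unfold L1. rewrite Lker_fun. apply RInt_sq_ge0. lra. apply cont2_sect, L_cont2. }
  destruct (classic (ex_RInt (fun y => k y * uh y a) 0 1)) as [Hint|Hnint].
  - assert (Hd := dhold_der_integrable t Ht Hint).
    split; [eexists; eauto|]. rewrite (is_derive_unique _ _ _ Hd).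
    eapply Rle_trans.
    + apply (derivative_square_bound _ (eps * k 1) (dhold eps lam q uh tj j t)
        (RInt (fun y => weight_k y * Uc y) 0 1) beta_k (Wc eps lam Uc 1) (Tc eps lam Uc 1) gamma_k u0 F S L1 N).
      * rewrite Dt_gain_identity, (dhold_eq t Ht Hint), <- HUin.
        unfold gain_integral. rewrite RInt01_clamp.
        replace (uh 1 t) with (Uc 1) by (unfold clamp_at; rewrite clamp01_id by lra; reflexivity).
        rewrite (Uc_inv eps lam He Uc HU 1). lra.
      * exact HF.
      * eapply Rle_trans. apply RInt_cauchy_schwarz; [lra | apply weight_k_cont1 | exact HU].
        apply Rmult_le_compat_l; [exact HF | apply Uc_L2_bound; auto].
      * apply Tc1_bound; auto.
    + right. unfold rho1, alpha3. fold gamma_k. ring.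
  - assert (Hd := dhold_der_not_integrable t Ht Hnint).
    split; [eexists; eauto|]. rewrite (is_derive_unique _ _ _ Hd).
    unfold rho1, alpha3, S. replace (0 ^ 2) with 0 by ring.
    repeat first [apply pow2_ge_0 | apply Rplus_le_le_0_compat | apply Rmult_le_pos | lra].
Qed.

End AtTime.
End HoldError.

Theorem lemma2 (eps lam q : R) (u uh : R -> R -> R) (tj : nat -> R) :
  0 < eps -> 0 < lam -> (lam + eps) / (2 * eps) < q ->
  tj 0%nat = 0 -> (forall j : nat, tj j < tj (S j)) ->
  closed_loop eps lam q u uh tj ->
  forall (j : nat) (t : R), tj j < t < tj (S j) ->
    ex_derive (dhold eps lam q uh tj j) t /\
    (Derive (dhold eps lam q uh tj j) t) ^ 2 <=
      rho1 eps lam q * (dhold eps lam q uh tj j t) ^ 2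
      + alpha1 eps lam q * RInt (fun x => (what eps lam uh x t) ^ 2) 0 1
      + alpha2 eps lam q * (what eps lam uh 1 t) ^ 2
      + alpha3 eps lam q * (wtilde eps lam q u uh 0 t) ^ 2.
Proof.
  intros Heps _ _ _ _ Hcl j t Ht.
  destruct (Hcl j) as [_ [Hreg Hobs]].
  destruct (Hobs t Ht) as [_ [_ [_ [Hpde [Hbc0 Hbc1]]]]].
  (* ũ(0,t) = w̃(0,t): the observer-error transformation is the identity at x = 0 *)
  replace (wtilde eps lam q u uh 0 t) with (u 0 t - uh 0 t)
    by (unfold wtilde, utilde; rewrite RIntR_point; ring).
  apply (hold_error_bound eps lam q ltac:(lra) uh tj j Hreg t (u 0 t - uh 0 t) (Uin eps lam q uh tj j));
    auto.
Qed.
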